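(* (a) Let $h\ge0$ and let $H=H(z)$, $z>0$, be a continuous function. Then there exists a one-parameter family of helicoidal surfaces with pitch $h$ in $\mathbb{S}^3$ with mean curvature $H(z)$, uniquely determined, up to translations along $c_0$, by the spherical angular momenta of their profile curves given by $$\mathcal K(z)=\pm\frac{\sqrt{h^2+(1-h^2)z^2}\,A(z)}{\sqrt{1+h^2A(z)^2}},\qquad\text{where } z^2A(z)=2\int zH(z)\,dz.$$ (b) Let $h\ge0$, $h\ne1$, and let $K_{\mathrm{ext}}=K_{\mathrm{ext}}(z)$, $z>0$, be a continuous function. Then there exists a one-parameter family of helicoidal surfaces with pitch $h$ in $\mathbb{S}^3$ with extrinsic curvature $K_{\mathrm{ext}}(z)$, uniquely determined, up to translations along $c_0$, by the spherical angular momenta of their profile curves given by $$\mathcal K(z)=\pm\sqrt{1+\frac{(1-h^2)z^2B(z)}{z^2+h^2B(z)}},\qquad\text{where } B(z)=2\int zK_{\mathrm{ext}}(z)\,dz.$$ (In both cases the parameter of the family is the integration constant of the indefinite integral.)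
   Context: Identify $\mathbb{S}^3$ with the unit sphere of $\mathbb{R}^4$ and let $c_0=\{(x_1,x_2,0,0)\in\mathbb{S}^3\}$. For $h\ge0$ and a regular arc-length parametrized curve $\xi(s)=(x(s),y(s),z(s))$ in $\{(x,y,z)\in\mathbb{S}^2:z>0\}$ with $z$ non-constant, the helicoidal surface with pitch $h$ and profile curve $\xi$ is $X^h(\xi)(s,t)=(x\cos ht-y\sin ht,\ x\sin ht+y\cos ht,\ z\cos t,\ z\sin t)$; translations along $c_0$ are the rotations of the $(x_1,x_2)$-plane. The spherical angular momentum of $\xi$ is $\mathcal K=\dot x\,y-x\,\dot y$, regarded as a function of $z$. The mean curvature and Gaussian curvature $K_G$ are functions of $z$ only, and the extrinsic curvature is $K_{\mathrm{ext}}=K_G-1$. The sign $\pm$ corresponds to the choice of orientation. *)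

From Stdlib Require Import Reals.
From Coquelicot Require Import Coquelicot.
Open Scope R_scope.

Record R4 := mkR4 { p1 : R; p2 : R; p3 : R; p4 : R }.

Definition dot4 (u v : R4) : R :=
  p1 u * p1 v + p2 u * p2 v + p3 u * p3 v + p4 u * p4 v.

Definition scal4 (c : R) (u : R4) : R4 :=
  mkR4 (c * p1 u) (c * p2 u) (c * p3 u) (c * p4 u).

Definition det3 (a1 a2 a3 b1 b2 b3 c1 c2 c3 : R) : R :=
  a1 * (b2 * c3 - b3 * c2) - a2 * (b1 * c3 - b3 * c1) + a3 * (b1 * c2 - b2 * c1).

(** Generalized cross product in R^4: [dot4 (cross4 u v w) x = det(u,v,w,x)];
    it is orthogonal to u, v, w. *)
Definition cross4 (u v w : R4) : R4 :=
  mkR4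
    (- det3 (p2 u) (p3 u) (p4 u) (p2 v) (p3 v) (p4 v) (p2 w) (p3 w) (p4 w))
    (  det3 (p1 u) (p3 u) (p4 u) (p1 v) (p3 v) (p4 v) (p1 w) (p3 w) (p4 w))
    (- det3 (p1 u) (p2 u) (p4 u) (p1 v) (p2 v) (p4 v) (p1 w) (p2 w) (p4 w))
    (  det3 (p1 u) (p2 u) (p3 u) (p1 v) (p2 v) (p3 v) (p1 w) (p2 w) (p3 w)).

Definition dS (X : R -> R -> R4) (s t : R) : R4 :=
  mkR4 (Derive (fun u => p1 (X u t)) s) (Derive (fun u => p2 (X u t)) s)
       (Derive (fun u => p3 (X u t)) s) (Derive (fun u => p4 (X u t)) s).

Definition dT (X : R -> R -> R4) (s t : R) : R4 :=
  mkR4 (Derive (fun v => p1 (X s v)) t) (Derive (fun v => p2 (X s v)) t)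
       (Derive (fun v => p3 (X s v)) t) (Derive (fun v => p4 (X s v)) t).

(** Unit normal of the surface X (lying in S^3) inside S^3: orthogonal to the
    position vector X and to the tangent vectors X_s, X_t.  (The opposite
    orientation is -N; the sign choice is handled explicitly below.) *)
Definition unit_normal (X : R -> R -> R4) (s t : R) : R4 :=
  let Nr := cross4 (X s t) (dS X s t) (dT X s t) in
  scal4 (/ sqrt (dot4 Nr Nr)) Nr.

Definition fE (X : R -> R -> R4) s t := dot4 (dS X s t) (dS X s t).
Definition fF (X : R -> R -> R4) s t := dot4 (dS X s t) (dT X s t).
Definition fG (X : R -> R -> R4) s t := dot4 (dT X s t) (dT X s t).

Definition sl (X : R -> R -> R4) s t := dot4 (dS (dS X) s t) (unit_normal X s t).
Definition sm (X : R -> R -> R4) s t := dot4 (dT (dS X) s t) (unit_normal X s t).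
Definition sn (X : R -> R -> R4) s t := dot4 (dT (dT X) s t) (unit_normal X s t).

Definition mean_curv (X : R -> R -> R4) (s t : R) : R :=
  (fE X s t * sn X s t - 2 * fF X s t * sm X s t + fG X s t * sl X s t)
  / (2 * (fE X s t * fG X s t - fF X s t ^ 2)).

Definition ext_curv (X : R -> R -> R4) (s t : R) : R :=
  (sl X s t * sn X s t - sm X s t ^ 2)
  / (fE X s t * fG X s t - fF X s t ^ 2).

Definition in_I (a b : Rbar) (s : R) : Prop := Rbar_lt a s /\ Rbar_lt s b.

(** xi = (x,y,z) : (a,b) -> S^2, C^2, arc-length parametrized, z > 0, and
    z is a (local) coordinate along the curve: z' <> 0. *)
Definition admissible_profile (a b : Rbar) (x y z : R -> R) : Prop :=
  Rbar_lt a b /\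
  forall s, in_I a b s ->
    x s ^ 2 + y s ^ 2 + z s ^ 2 = 1 /\ 0 < z s /\
    ex_derive x s /\ ex_derive y s /\ ex_derive z s /\
    ex_derive (Derive x) s /\ ex_derive (Derive y) s /\ ex_derive (Derive z) s /\
    continuous (Derive (Derive x)) s /\ continuous (Derive (Derive y)) s /\
    continuous (Derive (Derive z)) s /\
    Derive x s ^ 2 + Derive y s ^ 2 + Derive z s ^ 2 = 1 /\
    Derive z s <> 0.

Definition Xh (h : R) (x y z : R -> R) (s t : R) : R4 :=
  mkR4 (x s * cos (h * t) - y s * sin (h * t))
       (x s * sin (h * t) + y s * cos (h * t))
       (z s * cos t) (z s * sin t).

(** translation along c_0 = rotation of the (x1,x2)-plane *)
Definition transl_c0 (alpha : R) (p : R4) : R4 :=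
  mkR4 (p1 p * cos alpha - p2 p * sin alpha)
       (p1 p * sin alpha + p2 p * cos alpha) (p3 p) (p4 p).

Definition ang_mom (x y : R -> R) (s : R) : R := Derive x s * y s - x s * Derive y s.

(** The surface X^h(xi) has mean curvature H(z) (for one of its two orientations) *)
Definition has_mean_curvature (h : R) (a b : Rbar) (x y z : R -> R) (H : R -> R) : Prop :=
  exists eps : R, (eps = 1 \/ eps = -1) /\
    forall s t, in_I a b s -> eps * mean_curv (Xh h x y z) s t = H (z s).

Definition has_ext_curvature (h : R) (a b : Rbar) (x y z : R -> R) (Kext : R -> R) : Prop :=
  forall s t, in_I a b s -> ext_curv (Xh h x y z) s t = Kext (z s).

Definition antideriv (f P : R -> R) : Prop :=
  forall z, 0 < z -> is_derive P z (f z).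

(** formula (a): z^2 A(z) = Phi(z) *)
Definition fA (h : R) (Phi : R -> R) (z : R) : R :=
  let A := Phi z / z ^ 2 in
  sqrt (h ^ 2 + (1 - h ^ 2) * z ^ 2) * A / sqrt (1 + h ^ 2 * A ^ 2).

(** radicand of formula (b) *)
Definition RB (h : R) (B : R -> R) (z : R) : R :=
  1 + (1 - h ^ 2) * z ^ 2 * B z / (z ^ 2 + h ^ 2 * B z).

(** Uniqueness up to translations along c_0: two profile curves with the same
    spherical angular momentum as a function of z (F), passing through the same
    height z with z moving in the same direction, give helicoidal surfaces that
    differ by a translation along c_0 (after the shift of arc length). *)
Definition c0_uniqueness (h : R) : Prop :=
  forall (F : R -> R) (a1 b1 a2 b2 : Rbar) (x1 y1 z1 x2 y2 z2 : R -> R) (s1 s2 : R),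
    admissible_profile a1 b1 x1 y1 z1 ->
    admissible_profile a2 b2 x2 y2 z2 ->
    (forall s, in_I a1 b1 s -> ang_mom x1 y1 s = F (z1 s)) ->
    (forall s, in_I a2 b2 s -> ang_mom x2 y2 s = F (z2 s)) ->
    in_I a1 b1 s1 -> in_I a2 b2 s2 ->
    z1 s1 = z2 s2 ->
    0 < Derive z1 s1 * Derive z2 s2 ->
    exists alpha : R, forall u t,
      in_I a1 b1 (s1 + u) -> in_I a2 b2 (s2 + u) ->
      Xh h x2 y2 z2 (s2 + u) t = transl_c0 alpha (Xh h x1 y1 z1 (s1 + u) t).

(* The screw motions [u |-> screw h t u] (rotation by [h t] in the (x1,x2)-plane and by [t] in
   the (x3,x4)-plane) are isometries of S^3 mapping the profile curve onto the parameter line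
   [X^h(xi)(., t)].  Hence the fundamental forms only depend on [s], and for a unit-speed profile
   on S^2 they are polynomials in [z], [z'], [K = x' y - x y'] and [K'], with
   [E G - F^2 = W = z^2 + h^2 z'^2 = h^2 (1 - z^2) + z^2 - h^2 K^2].  The curvatures are then exact
   derivatives along the profile:
     [2 z z' H = - (z^2 K / sqrt W)']   and   [2 z z' K_ext = ((K^2 - 1) z^2 / W)'],
   so [z^2 K / sqrt W] and [(K^2 - 1) z^2 / W] are (up to sign) primitives of [2 z H] and
   [2 z K_ext] in the variable [z], and solving for [K] gives the two formulas.
   Conversely, [K] as a function of [z] determines [z' = +-sqrt (1 - z^2 - K^2)], an autonomous
   equation whose solutions are the inverses of [s = int dz / sqrt (1 - z^2 - K^2)], and then
   [x + i y = sqrt (1 - z^2) e^(i theta)] with [theta' = - K / (1 - z^2)]: the only freedom left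
   is the initial value of [theta], i.e. a rotation of the (x1,x2)-plane. *)

From Stdlib Require Import Reals Lra Nsatz FunctionalExtensionality ClassicalEpsilon Ranalysis5.
From Coquelicot Require Import Coquelicot.
Open Scope R_scope.

Ltac fold_eta := repeat match goal with
  |- context [Derive (fun t => ?f t) ?s] => change (Derive (fun t => f t) s) with (Derive f s) end.

(** * Calculus on open intervals *)

Lemma in_I_locally a b s : in_I a b s -> locally s (in_I a b).
Proof.
  intros Hs. apply (open_and _ _ (open_Rbar_gt a) (open_Rbar_lt b)). exact Hs.
Qed.

Lemma in_I_between a b u v w : in_I a b u -> in_I a b v -> u <= w <= v -> in_I a b w.
Proof. unfold in_I; destruct a, b; simpl; intros; lra. Qed.

Lemma in_I_nonempty a b : Rbar_lt a b -> exists s, in_I a b s.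
Proof.
  unfold in_I; destruct a as [a| |], b as [b| |]; simpl; intros H; try tauto.
  - exists ((a + b) / 2); lra.
  - exists (a + 1); lra.
  - exists (b - 1); lra.
  - exists 0; auto.
Qed.

Lemma is_derive_0_const (S : R -> Prop) (f : R -> R) :
  (forall u v w, S u -> S v -> u <= w <= v -> S w) ->
  (forall u, S u -> is_derive f u 0) ->
  forall u v, S u -> S v -> f u = f v.
Proof.
  intros Sconv Hd.
  assert (Hlt : forall u v, S u -> S v -> u < v -> f u = f v).
  { intros u v Hu Hv Huv.
    destruct (MVT_cor2 f (fun _ => 0) u v Huv) as (c & Hc & _); [|lra].
    intros c Hc. apply is_derive_Reals, Hd, (Sconv u v); auto. }
  intros u v Hu Hv. destruct (Rtotal_order u v) as [L | [-> | L]]; auto.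
  symmetry; auto.
Qed.

Lemma antideriv_of_continuous (f : R -> R) :
  (forall w, 0 < w -> continuous f w) -> exists P, antideriv f P.
Proof.
  intros Hc. exists (fun w => RInt f 1 w). intros w Hw.
  apply (is_derive_RInt f (fun w => RInt f 1 w) 1 w); [|auto].
  assert (Hp : 0 < w / 2) by lra.
  exists (mkposreal _ Hp). intros v Hv. change (Rabs (v - w) < w / 2) in Hv.
  refine (RInt_correct f 1 v (ex_RInt_continuous f 1 v _)). intros u Hu. apply Hc.
  apply Rabs_def2 in Hv. assert (0 < Rmin 1 v) by (apply Rmin_glb_lt; lra). lra.
Qed.

Lemma continuous_2z (H : R -> R) :
  (forall z, 0 < z -> continuous H z) -> forall z, 0 < z -> continuous (fun z => 2 * z * H z) z.
Proof.
  intros Hc w Hw. apply (continuous_mult (fun z => 2 * z) H); [|auto].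
  apply (continuous_scal_r 2 (fun z : R => z)), continuous_id.
Qed.

Lemma antideriv_plus_const (f P : R -> R) C : antideriv f P -> antideriv f (fun w => P w + C).
Proof.
  intros HP w Hw. rewrite <- (Rplus_0_r (f w)).
  apply (is_derive_plus P (fun _ => C)); [apply HP, Hw | exact (is_derive_const C w)].
Qed.

Lemma is_derive_antideriv_comp (f P z : R -> R) s : antideriv f P -> 0 < z s -> ex_derive z s ->
  is_derive (fun u => P (z u)) s (f (z s) * Derive z s).
Proof.
  intros HP Hz dz. rewrite Rmult_comm.
  apply (is_derive_comp P z s), Derive_correct; auto.
Qed.

Lemma is_derive_locally_const (f : R -> R) s c l :
  locally s (fun u => f u = c) -> is_derive f s l -> l = 0.
Proof.
  intros Hc Hd. rewrite <- (Derive_const c s). symmetry.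
  apply is_derive_unique, (is_derive_ext_loc f); auto.
Qed.

Lemma continuous_of_is_derive (f : R -> R) w l : is_derive f w l -> continuous f w.
Proof. intros H. apply (ex_derive_continuous (V := R_NormedModule) f). eexists; eauto. Qed.

Lemma locally_of_continuous (f : R -> R) (U : R -> Prop) z0 :
  continuous f z0 -> open U -> U (f z0) -> locally z0 (fun w => U (f w)).
Proof. intros Hc HU Hz. exact (Hc U (HU _ Hz)). Qed.

Lemma nonzero_continuous_same_sign (f : R -> R) a b :
  (forall w, in_I a b w -> continuity_pt f w /\ f w <> 0) ->
  forall u v, in_I a b u -> in_I a b v -> 0 < f u * f v.
Proof.
  intros Hf.
  assert (Hlt : forall u v, in_I a b u -> in_I a b v -> u < v -> 0 < f u * f v).
  { intros u v Hu Hv Huv. destruct (Rlt_or_le 0 (f u * f v)) as [L | L]; [exact L | exfalso].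
    assert (Hin : forall w, u <= w <= v -> in_I a b w) by (intros w; apply in_I_between; auto).
    assert (Hc : forall w, u <= w <= v -> continuity_pt f w) by (intros w Hw; apply Hf, Hin, Hw).
    destruct (Hf u Hu) as [_ fu]. destruct (Hf v Hv) as [_ fv].
    destruct (Rlt_or_le (f u) 0) as [Lu | Lu].
    - destruct (f_interv_is_interv f u v 0 Huv ltac:(nra) Hc) as (w & Hw & fw).
      apply (proj2 (Hf w (Hin w Hw))), fw.
    - destruct (f_interv_is_interv (fun w => - f w) u v 0 Huv ltac:(nra)) as (w & Hw & fw).
      + intros w Hw. apply continuity_pt_opp, Hc, Hw.
      + apply (proj2 (Hf w (Hin w Hw))). lra. }
  intros u v Hu Hv. destruct (Rtotal_order u v) as [L | [<- | L]]; auto.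
  - destruct (Hf u Hu) as [_ fu]. nra.
  - rewrite Rmult_comm. auto.
Qed.

Lemma locally_shift_in_I a b s u : in_I a b (s + u) -> locally u (fun v => in_I a b (s + v)).
Proof.
  intros Hu. destruct (in_I_locally a b (s + u) Hu) as [e He]. exists e. intros v Hv. apply He.
  change (Rabs (s + v - (s + u)) < e). replace (s + v - (s + u)) with (v - u) by ring. exact Hv.
Qed.

Lemma closed_interval_in_open_convex (D : R -> Prop) u :
  (forall v, D v -> locally v D) -> (forall v w t, D v -> D w -> v <= t <= w -> D t) ->
  D 0 -> D u -> exists m M, m < 0 < M /\ m < u < M /\ forall v, m <= v <= M -> D v.
Proof.
  intros Dopen Dconv D0 Du.
  destruct (Dopen 0 D0) as [e0 He0]. destruct (Dopen u Du) as [e1 He1].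
  set (e := Rmin e0 e1).
  assert (epos : 0 < e) by (apply Rmin_glb_lt; apply cond_pos).
  assert (in_ball : forall c (r : posreal) t, Rabs (t - c) < r -> ball c r t) by (intros; assumption).
  assert (near : forall c d, (forall t, ball c e0 t -> D t) -> (forall t, ball d e1 t -> D t) ->
                   D (c - e / 2) /\ D (c + e / 2) /\ D (d - e / 2) /\ D (d + e / 2)).
  { intros c d Hc Hd. assert (e <= e0) by apply Rmin_l. assert (e <= e1) by apply Rmin_r.
    repeat split; [apply Hc | apply Hc | apply Hd | apply Hd];
      apply in_ball; rewrite Rabs_lt_between; lra. }
  destruct (near 0 u He0 He1) as (Dm0 & DM0 & Dmu & DMu).
  exists (Rmin 0 u - e / 2), (Rmax 0 u + e / 2).
  assert (Dm : D (Rmin 0 u - e / 2)) by (unfold Rmin; destruct Rle_dec; auto).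
  assert (DM : D (Rmax 0 u + e / 2)) by (unfold Rmax; destruct Rle_dec; auto).
  pose proof (Rmin_l 0 u). pose proof (Rmin_r 0 u). pose proof (Rmax_l 0 u). pose proof (Rmax_r 0 u).
  split; [lra | split; [lra |]]. intros v Hv. apply (Dconv _ _ v Dm DM Hv).
Qed.

Lemma exists_angle c s : c ^ 2 + s ^ 2 = 1 -> exists al, cos al = c /\ sin al = s.
Proof.
  intros H. assert (Hc : -1 <= c <= 1) by (split; nra).
  assert (Hs : sqrt (1 - c²) = Rabs s).
  { rewrite <- sqrt_Rsqr_abs. f_equal. unfold Rsqr. nra. }
  destruct (Rle_or_lt 0 s) as [L | L].
  - exists (acos c). rewrite cos_acos, sin_acos, Hs, Rabs_right by lra. auto.
  - exists (- acos c). rewrite cos_neg, sin_neg, cos_acos, sin_acos, Hs, Rabs_left by lra.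
    split; [reflexivity | ring].
Qed.

Lemma sign_sqr (e : R) : e = 1 \/ e = -1 -> e * e = 1.
Proof. intros [-> | ->]; ring. Qed.

Section PositiveDerivative.
Variables (f df : R -> R) (lb ub : R).
Hypothesis Hd : forall w, lb <= w <= ub -> is_derive f w (df w) /\ 0 < df w.

Lemma strictly_increasing_of_derive_pos u v : lb <= u -> u < v -> v <= ub -> f u < f v.
Proof.
  intros Hu Huv Hv. destruct (MVT_cor2 f df u v Huv) as (c & Hc & Hcuv).
  - intros c Hc. apply is_derive_Reals, Hd. lra.
  - assert (0 < df c) by (apply Hd; lra). nra.
Qed.

Lemma nondecreasing_of_derive_pos u v : lb <= u -> u <= v -> v <= ub -> f u <= f v.
Proof.
  intros Hu Huv Hv. destruct (Req_dec u v) as [-> | Hne]; [lra |].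
  apply Rlt_le, strictly_increasing_of_derive_pos; lra.
Qed.

Lemma continuity_pt_of_derive_pos w : lb <= w <= ub -> continuity_pt f w.
Proof. intros Hw. apply continuity_pt_filterlim, (continuous_of_is_derive f w (df w)), Hd, Hw. Qed.

Lemma inverse_of_derive_pos : lb < ub ->
  exists g : R -> R,
    (forall s, f lb <= s <= f ub -> lb <= g s <= ub /\ f (g s) = s) /\
    (forall w, lb <= w <= ub -> g (f w) = w).
Proof.
  intros Hlt.
  pose proof continuity_pt_of_derive_pos as cont.
  set (g := fun s => epsilon (inhabits lb) (fun w => lb <= w <= ub /\ f w = s)).
  assert (Hg : forall s, f lb <= s <= f ub -> lb <= g s <= ub /\ f (g s) = s).
  { intros s Hs. apply epsilon_spec.
    destruct (f_interv_is_interv f lb ub s Hlt Hs cont) as [w Hw]. exists w; auto. }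
  exists g. split; [exact Hg |]. intros w Hw.
  assert (Hs : f lb <= f w <= f ub) by (split; apply nondecreasing_of_derive_pos; lra).
  destruct (Hg _ Hs) as [Hgs Hfg].
  destruct (Rtotal_order (g (f w)) w) as [L | [E | L]]; auto.
  - pose proof (strictly_increasing_of_derive_pos (g (f w)) w ltac:(lra) L ltac:(lra)). lra.
  - pose proof (strictly_increasing_of_derive_pos w (g (f w)) ltac:(lra) L ltac:(lra)). lra.
Qed.

Lemma is_derive_inverse (g : R -> R) : lb < ub ->
  (forall s, f lb <= s <= f ub -> lb <= g s <= ub /\ f (g s) = s) ->
  (forall w, lb <= w <= ub -> g (f w) = w) ->
  forall s, f lb < s < f ub -> is_derive g s (/ df (g s)).
Proof.
  intros Hlt Hg Hgf s Hs.
  assert (flt : f lb < f ub) by (apply strictly_increasing_of_derive_pos; lra).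
  assert (Hgs : lb <= g s <= ub) by (apply Hg; lra).
  assert (Hgs' : g (f lb) <= g s <= g (f ub)) by (rewrite !Hgf by lra; exact Hgs).
  assert (Prf : forall w, g (f lb) <= w <= g (f ub) -> derivable_pt f w).
  { intros w Hw. rewrite !Hgf in Hw by lra.
    exists (df w). apply is_derive_Reals, Hd, Hw. }
  pose proof continuity_pt_of_derive_pos as cont.
  assert (Prg : continuity_pt g s).
  { apply (continuity_pt_recip_interv f g lb ub Hlt strictly_increasing_of_derive_pos); auto.
    - intros w Hw1 Hw2. unfold comp, id. apply Hg; lra.
    - intros w Hw1 Hw2. apply Hg; lra. }
  assert (Hdf : derive_pt f (g s) (Prf (g s) Hgs') = df (g s))
    by (apply derive_pt_eq_0, is_derive_Reals, Hd, Hgs).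
  assert (dpos : 0 < df (g s)) by (apply Hd, Hgs).
  pose proof (derivable_pt_lim_recip_interv f g (f lb) (f ub) s Prf Prg flt Hs Hgs') as Hrecip.
  rewrite Hdf in Hrecip. apply is_derive_Reals. rewrite <- (Rmult_1_l (/ df (g s))).
  apply Hrecip; [intros w Hw; apply Hg, Hw | lra].
Qed.

Lemma increasing_inverse : lb < ub ->
  exists g : R -> R,
    (forall s, f lb <= s <= f ub -> lb <= g s <= ub /\ f (g s) = s) /\
    (forall w, lb <= w <= ub -> g (f w) = w) /\
    (forall s, f lb < s < f ub -> is_derive g s (/ df (g s))).
Proof.
  intros Hlt. destruct (inverse_of_derive_pos Hlt) as (g & Hg & Hgf).
  exists g. split; [exact Hg | split; [exact Hgf | apply is_derive_inverse; assumption]].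
Qed.

End PositiveDerivative.

Section AutonomousODE.
Variables (Z1 Z2 G : R -> R) (m M : R).
Hypotheses (Hm : m < 0) (HM : 0 < M)
  (HZ1 : forall v, m <= v <= M -> is_derive Z1 v (G (Z1 v)) /\ 0 < G (Z1 v))
  (HZ2 : forall v, m <= v <= M -> is_derive Z2 v (G (Z2 v)) /\ 0 < G (Z2 v))
  (H0 : Z1 0 = Z2 0).

(* With [T] the inverse of [Z2], [T (Z1 w) - w] has derivative
   [G (Z1 w) / G (Z2 (T (Z1 w))) - 1 = 0] as long as [Z1 w] stays in the range of [Z2]. *)
Lemma ode_agree_in_range v : 0 <= v < M -> (forall w, 0 <= w <= v -> Z1 w < Z2 M) -> Z1 v = Z2 v.
Proof.
  intros Hv Hbnd.
  destruct (increasing_inverse Z2 (fun v => G (Z2 v)) m M HZ2 ltac:(lra)) as (T & HT & HTZ & dT).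
  assert (range : forall w, 0 <= w <= v -> Z2 m < Z1 w < Z2 M).
  { intros w Hw. split; [| apply Hbnd, Hw].
    apply Rlt_le_trans with (Z2 0); [apply (strictly_increasing_of_derive_pos Z2 _ m M HZ2); lra |].
    rewrite <- H0. apply (nondecreasing_of_derive_pos Z1 _ m M HZ1); lra. }
  assert (dphi : forall w, 0 <= w <= v -> is_derive (fun w => T (Z1 w) - w) w 0).
  { intros w Hw. destruct (range w Hw) as [r1 r2]. destruct (HZ1 w ltac:(lra)) as [d1 p1].
    pose proof (dT (Z1 w) (conj r1 r2)) as dTw.
    destruct (HT (Z1 w) ltac:(lra)) as [_ ZT]. rewrite ZT in dTw.
    replace 0 with (G (Z1 w) * / G (Z1 w) - 1) by (field; lra).
    apply (is_derive_minus (fun w => T (Z1 w)) (fun w => w)); [| exact (is_derive_id w)].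
    apply (is_derive_comp T Z1); auto. }
  assert (E : T (Z1 v) - v = T (Z1 0) - 0).
  { apply (is_derive_0_const (fun w => 0 <= w <= v) (fun w => T (Z1 w) - w)); auto; intros; lra. }
  rewrite H0, HTZ, Rminus_0_r in E by lra.
  destruct (HT (Z1 v)) as [_ ZT]; [destruct (range v); lra |].
  rewrite <- ZT. f_equal. lra.
Qed.

Lemma ode_unique_forward u : 0 < u < M -> Z1 u = Z2 u.
Proof.
  intros Hu. pose proof (nondecreasing_of_derive_pos Z1 _ m M HZ1) as mono1.
  pose proof (strictly_increasing_of_derive_pos Z2 _ m M HZ2) as incr2.
  apply ode_agree_in_range; [lra |]. intros w Hw.
  destruct (Rlt_le_dec (Z1 u) (Z2 M)) as [L | L];
    [apply Rle_lt_trans with (Z1 u); [apply mono1 |]; lra | exfalso].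
  assert (c1 : forall w, 0 <= w <= u -> continuity_pt Z1 w).
  { intros w' Hw'. apply continuity_pt_filterlim, (continuous_of_is_derive Z1 w' (G (Z1 w'))), HZ1.
    lra. }
  assert (Z2 0 < Z2 u < Z2 M) by (split; apply incr2; lra).
  destruct (f_interv_is_interv Z1 0 u (Z2 u) ltac:(lra) ltac:(lra) c1) as [v0 [Hv0 Ev0]].
  assert (Z1 v0 = Z2 v0).
  { apply ode_agree_in_range; [lra |]. intros w' Hw'.
    apply Rle_lt_trans with (Z1 v0); [apply mono1 |]; lra. }
  destruct (Rtotal_order v0 u) as [L1 | [-> | L1]]; [| lra | lra].
  assert (Z2 v0 < Z2 u) by (apply incr2; lra). lra.
Qed.

End AutonomousODE.

Lemma ode_solution_reflect (Z G : R -> R) m M :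
  (forall v, m <= v <= M -> is_derive Z v (G (Z v)) /\ 0 < G (Z v)) ->
  forall v, - M <= v <= - m ->
    is_derive (fun v => - Z (- v)) v (G (- - Z (- v))) /\ 0 < G (- - Z (- v)).
Proof.
  intros HZ v Hv. rewrite Ropp_involutive. destruct (HZ (- v)) as [dZ pos]; [lra |].
  split; [| exact pos].
  assert (dopp : is_derive (fun v => - v) v (-1)) by (auto_derive; auto; ring).
  replace (G (Z (- v))) with (- (-1 * G (Z (- v)))) by ring.
  apply (is_derive_opp (fun v => Z (- v))), (is_derive_comp Z (fun v => - v)); auto.
Qed.

Lemma ode_unique (Z1 Z2 G : R -> R) m M u : m < 0 -> 0 < M -> m < u < M ->
  (forall v, m <= v <= M -> is_derive Z1 v (G (Z1 v)) /\ 0 < G (Z1 v)) ->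
  (forall v, m <= v <= M -> is_derive Z2 v (G (Z2 v)) /\ 0 < G (Z2 v)) ->
  Z1 0 = Z2 0 -> Z1 u = Z2 u.
Proof.
  intros Hm HM Hu HZ1 HZ2 H0.
  destruct (Rtotal_order u 0) as [L | [-> | L]]; [| exact H0 | apply (ode_unique_forward Z1 Z2 G m M); auto; lra].
  enough (E : - Z1 (- - u) = - Z2 (- - u)) by (rewrite Ropp_involutive in E; lra).
  apply (ode_unique_forward (fun v => - Z1 (- v)) (fun v => - Z2 (- v)) (fun w => G (- w)) (- M) (- m));
    try apply ode_solution_reflect; auto; try lra.
  rewrite Ropp_0, H0. reflexivity.
Qed.

Lemma is_derive_RInt_in_I a b (f : R -> R) c w : in_I a b c -> in_I a b w ->
  (forall t, in_I a b t -> continuous f t) -> is_derive (fun v => RInt f c v) w (f w).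
Proof.
  intros Hc Hw Hf. apply (is_derive_RInt f _ c w); [| apply Hf, Hw].
  apply (filter_imp (in_I a b)); [| apply in_I_locally, Hw].
  intros v Hv. refine (RInt_correct f c v (ex_RInt_continuous f c v _)).
  intros t Ht. apply Hf, (in_I_between a b (Rmin c v) (Rmax c v));
    [unfold Rmin | unfold Rmax | exact Ht]; destruct Rle_dec; auto.
Qed.

(* The solution of [zeta' = phi zeta] through [z0] is the inverse of
   [w |-> int_z0^w dt / phi t]. *)
Lemma autonomous_ode_solution (phi : R -> R) c z0 d : c < z0 < d ->
  (forall w, in_I c d w -> continuous phi w /\ 0 < phi w) ->
  exists (a b : R) (zeta : R -> R), a < 0 < b /\ zeta 0 = z0 /\
    forall s, a < s < b -> in_I c d (zeta s) /\ is_derive zeta s (phi (zeta s)).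
Proof.
  intros Hz0 Hphi.
  set (sigma := fun w => RInt (fun t => / phi t) z0 w).
  assert (Hq : forall w, in_I c d w -> continuous (fun t => / phi t) w /\ 0 < / phi w).
  { intros w Hw. destruct (Hphi w Hw) as [cont pos].
    split; [apply (continuous_Rinv_comp phi); [exact cont | apply Rgt_not_eq, pos] |
            apply Rinv_0_lt_compat, pos]. }
  set (lb := (c + z0) / 2). set (ub := (z0 + d) / 2).
  assert (Hin : forall w, lb <= w <= ub -> in_I c d w) by (intros w Hw; split; simpl; unfold lb, ub in Hw; lra).
  assert (Hsigma : forall w, lb <= w <= ub -> is_derive sigma w (/ phi w) /\ 0 < / phi w).
  { intros w Hw. split; [| apply Hq, Hin, Hw].
    apply (is_derive_RInt_in_I c d (fun t => / phi t));
      [split; simpl; lra | apply Hin, Hw | intros t Ht; apply Hq, Ht]. }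
  destruct (increasing_inverse sigma _ lb ub Hsigma ltac:(unfold lb, ub; lra))
    as (zeta & Hzeta & Hzs & dzeta).
  pose proof (strictly_increasing_of_derive_pos sigma _ _ _ Hsigma) as incr.
  assert (s0 : sigma z0 = 0) by (unfold sigma; rewrite RInt_point; reflexivity).
  exists (sigma lb), (sigma ub), zeta.
  split; [split; rewrite <- s0; apply incr; unfold lb, ub; lra |].
  split; [rewrite <- s0; apply Hzs; unfold lb, ub; lra |].
  intros s Hs. destruct (Hzeta s ltac:(lra)) as [Hrange _]. split; [apply Hin, Hrange |].
  rewrite <- (Rinv_inv (phi (zeta s))). apply dzeta, Hs.
Qed.

(** * C^1 and C^2 calculus *)

Definition C1_at (f f' : R -> R) (w : R) : Prop := is_derive f w (f' w) /\ continuous f' w.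

Definition C2_at (f f' f'' : R -> R) (s : R) : Prop := is_derive f s (f' s) /\ C1_at f' f'' s.

Section C1Calculus.
Variables (f f' g g' : R -> R) (w : R).

Lemma C1_const c : C1_at (fun _ => c) (fun _ => 0) w.
Proof. split; [auto_derive; auto | apply continuous_const]. Qed.

Lemma C1_id : C1_at (fun t => t) (fun _ => 1) w.
Proof. split; [auto_derive; auto | apply continuous_const]. Qed.

Hypotheses (Hf : C1_at f f' w) (Hg : C1_at g g' w).

Lemma C1_plus : C1_at (fun t => f t + g t) (fun t => f' t + g' t) w.
Proof.
  destruct Hf as [df cf], Hg as [dg cg].
  split; [apply (is_derive_plus f g) | apply (continuous_plus f' g')]; auto.
Qed.

Lemma C1_opp : C1_at (fun t => - f t) (fun t => - f' t) w.
Proof.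
  destruct Hf as [df cf]. split; [apply (is_derive_opp f) | apply (continuous_opp f')]; auto.
Qed.

Lemma C1_minus : C1_at (fun t => f t - g t) (fun t => f' t - g' t) w.
Proof.
  destruct Hf as [df cf], Hg as [dg cg].
  split; [apply (is_derive_minus f g) | apply (continuous_minus f' g')]; auto.
Qed.

Lemma C1_mult : C1_at (fun t => f t * g t) (fun t => f' t * g t + f t * g' t) w.
Proof.
  destruct Hf as [df cf], Hg as [dg cg]. split.
  - apply (is_derive_mult f g); auto. intros; apply Rmult_comm.
  - apply (continuous_plus (fun t => f' t * g t) (fun t => f t * g' t));
      [apply (continuous_mult f' g) | apply (continuous_mult f g')]; auto;
      eapply continuous_of_is_derive; eauto.
Qed.

Lemma C1_sqr : C1_at (fun t => f t ^ 2) (fun t => 2 * f t * f' t) w.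
Proof.
  destruct Hf as [df cf]. split.
  - replace (2 * f w * f' w) with (INR 2 * f' w * f w ^ Init.Nat.pred 2) by (simpl; ring).
    apply (is_derive_pow f 2); auto.
  - apply (continuous_mult (fun t => 2 * f t) f'); auto.
    apply (continuous_scal_r 2 f). eapply continuous_of_is_derive; eauto.
Qed.

Lemma C1_inv : f w <> 0 -> C1_at (fun t => / f t) (fun t => - f' t / f t ^ 2) w.
Proof.
  intros nz. destruct Hf as [df cf]. split.
  - apply (is_derive_inv f); auto.
  - apply (continuous_mult (fun t => - f' t)); [apply (continuous_opp f'), cf |].
    apply (continuous_Rinv_comp (fun t => f t ^ 2)); [| apply pow_nonzero, nz].
    eapply continuous_of_is_derive, (proj1 C1_sqr).
Qed.

Lemma C1_sqrt : 0 < f w -> C1_at (fun t => sqrt (f t)) (fun t => f' t / (2 * sqrt (f t))) w.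
Proof.
  intros pos. destruct Hf as [df cf]. split.
  - apply (is_derive_sqrt f); auto.
  - apply (continuous_mult f'); auto.
    apply (continuous_Rinv_comp (fun t => 2 * sqrt (f t))).
    + apply (continuous_scal_r 2 (fun t => sqrt (f t))), (continuous_sqrt_comp f).
      eapply continuous_of_is_derive; eauto.
    + apply Rmult_integral_contrapositive_currified; [lra |].
      apply Rgt_not_eq, sqrt_lt_R0, pos.
Qed.

End C1Calculus.

Lemma C1_cos w : C1_at cos (fun t => - sin t) w.
Proof.
  split; [auto_derive; auto; ring |].
  apply (continuous_opp sin), (continuous_sin_comp (fun t => t)), continuous_id.
Qed.

Lemma C1_sin w : C1_at sin cos w.
Proof.
  split; [auto_derive; auto; ring |]. apply (continuous_cos_comp (fun t => t)), continuous_id.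
Qed.

Lemma C1_neg_sin w : C1_at (fun t => - sin t) (fun t => - cos t) w.
Proof. apply (C1_opp sin cos), C1_sin. Qed.

Lemma is_derive_comp_mult (phi f : R -> R) s l1 l2 :
  is_derive phi (f s) l1 -> is_derive f s l2 -> is_derive (fun t => phi (f t)) s (l1 * l2).
Proof. intros H1 H2. rewrite Rmult_comm. apply (is_derive_comp phi f); auto. Qed.

Lemma C1_comp (phi phi' f f' : R -> R) s : C1_at phi phi' (f s) -> C1_at f f' s ->
  C1_at (fun t => phi (f t)) (fun t => phi' (f t) * f' t) s.
Proof.
  intros [dphi cphi] [df cf]. split; [apply is_derive_comp_mult; auto |].
  apply (continuous_mult (fun t => phi' (f t)) f'); auto.
  apply (continuous_comp f phi'); auto. eapply continuous_of_is_derive; eauto.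
Qed.

Lemma C1_of_C2 (f f' f'' : R -> R) s : C2_at f f' f'' s -> C1_at f f' s.
Proof. intros [df [df' _]]. split; [exact df | eapply continuous_of_is_derive, df']. Qed.

Lemma C2_comp (phi phi' phi'' f f' f'' : R -> R) s :
  C1_at phi phi' (f s) -> C1_at phi' phi'' (f s) -> C2_at f f' f'' s ->
  C2_at (fun t => phi (f t)) (fun t => phi' (f t) * f' t)
        (fun t => phi'' (f t) * f' t * f' t + phi' (f t) * f'' t) s.
Proof.
  intros Hphi Hphi' Hf. pose proof (C1_of_C2 _ _ _ _ Hf) as Hf1. destruct Hf as [_ Hf'].
  split; [apply (C1_comp phi phi' f f'); auto |].
  apply (C1_mult (fun t => phi' (f t)) (fun t => phi'' (f t) * f' t) f' f''); auto.
  apply C1_comp; auto.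
Qed.

Lemma C2_mult (f f' f'' g g' g'' : R -> R) s : C2_at f f' f'' s -> C2_at g g' g'' s ->
  C2_at (fun t => f t * g t) (fun t => f' t * g t + f t * g' t)
        (fun t => (f'' t * g t + f' t * g' t) + (f' t * g' t + f t * g'' t)) s.
Proof.
  intros Hf Hg. pose proof (C1_of_C2 _ _ _ _ Hf) as Hf1. pose proof (C1_of_C2 _ _ _ _ Hg) as Hg1.
  destruct Hf as [_ Hf'], Hg as [_ Hg'].
  split; [apply (C1_mult f f' g g'); auto |].
  apply (C1_plus (fun t => f' t * g t) _ (fun t => f t * g' t)); apply C1_mult; auto.
Qed.

Lemma C2_of_ode (f phi phi' : R -> R) s : is_derive f s (phi (f s)) -> C1_at phi phi' (f s) ->
  C2_at f (fun t => phi (f t)) (fun t => phi' (f t) * phi (f t)) s.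
Proof.
  intros df Hphi. split; [exact df |]. apply (C1_comp phi phi' f (fun t => phi (f t))); auto.
  split; [exact df |]. apply (continuous_comp f phi); [eapply continuous_of_is_derive, df |].
  eapply continuous_of_is_derive, Hphi.
Qed.

Lemma C2_Derive a b (f f' f'' : R -> R) : (forall s, in_I a b s -> C2_at f f' f'' s) ->
  forall s, in_I a b s ->
  ex_derive f s /\ Derive f s = f' s /\ ex_derive (Derive f) s /\ continuous (Derive (Derive f)) s.
Proof.
  intros Hf.
  assert (D1 : forall t, in_I a b t -> Derive f t = f' t)
    by (intros t Ht; apply is_derive_unique, Hf, Ht).
  assert (D2 : forall t, in_I a b t -> is_derive (Derive f) t (f'' t)).
  { intros t Ht. apply (is_derive_ext_loc f'); [| apply Hf, Ht].
    apply (filter_imp (in_I a b)); [intros u Hu; symmetry; apply D1, Hu | apply in_I_locally, Ht]. }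
  intros s Hs. split; [exists (f' s); apply Hf, Hs |]. split; [apply D1, Hs |].
  split; [exists (f'' s); apply D2, Hs |].
  apply (continuous_ext_loc _ f''); [| apply Hf, Hs].
  apply (filter_imp (in_I a b)); [| apply in_I_locally, Hs].
  intros t Ht. symmetry. apply is_derive_unique, D2, Ht.
Qed.

Lemma C1_antideriv (f P : R -> R) w : (forall w, 0 < w -> continuous f w) -> antideriv f P -> 0 < w ->
  C1_at P f w.
Proof. intros Hc HP Hw. split; [apply HP | apply Hc]; exact Hw. Qed.

(** * Curvatures of helicoidal surfaces *)

Definition screw (h t : R) (u : R4) : R4 :=
  mkR4 (p1 u * cos (h * t) - p2 u * sin (h * t)) (p1 u * sin (h * t) + p2 u * cos (h * t))
       (p3 u * cos t - p4 u * sin t) (p3 u * sin t + p4 u * cos t).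

Definition screw_gen (h : R) (u : R4) : R4 := mkR4 (- (h * p2 u)) (h * p1 u) (- p4 u) (p3 u).

Lemma Xh_screw h x y z : Xh h x y z = fun s t => screw h t (mkR4 (x s) (y s) (z s) 0).
Proof.
  apply functional_extensionality; intros s; apply functional_extensionality; intros t.
  unfold Xh, screw; simpl; f_equal; ring.
Qed.

Lemma dT_screw h (V : R -> R4) s t :
  dT (fun s t => screw h t (V s)) s t = screw h t (screw_gen h (V s)).
Proof.
  unfold dT, screw, screw_gen; simpl.
  f_equal; apply is_derive_unique; auto_derive; auto; ring.
Qed.

Lemma dS_screw h (v1 v2 v3 v4 : R -> R) s t :
  ex_derive v1 s -> ex_derive v2 s -> ex_derive v3 s -> ex_derive v4 s ->
  dS (fun s t => screw h t (mkR4 (v1 s) (v2 s) (v3 s) (v4 s))) s t =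
  screw h t (mkR4 (Derive v1 s) (Derive v2 s) (Derive v3 s) (Derive v4 s)).
Proof.
  intros d1 d2 d3 d4. unfold dS, screw; simpl.
  f_equal; apply is_derive_unique; auto_derive; auto; fold_eta; ring.
Qed.

Lemma dS_ext_loc (X Y : R -> R -> R4) s t :
  locally s (fun u => X u t = Y u t) -> dS X s t = dS Y s t.
Proof.
  intros E. unfold dS.
  f_equal; apply Derive_ext_loc; apply (filter_imp _ _ (fun u H => f_equal _ H) E).
Qed.

Lemma dT_ext (X Y : R -> R -> R4) s t : (forall v, X s v = Y s v) -> dT X s t = dT Y s t.
Proof. intros E. unfold dT. f_equal; apply Derive_ext; intros v; rewrite E; reflexivity. Qed.

Section HelicoidalJets.
Variables (h : R) (a b : Rbar) (x y z : R -> R).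
Hypothesis Hadm : admissible_profile a b x y z.

Definition pos_vec s := mkR4 (x s) (y s) (z s) 0.
Definition vel_vec s := mkR4 (Derive x s) (Derive y s) (Derive z s) 0.
Definition acc_vec s := mkR4 (Derive (Derive x) s) (Derive (Derive y) s) (Derive (Derive z) s) 0.

Lemma admissible_derivable s : in_I a b s ->
  ex_derive x s /\ ex_derive y s /\ ex_derive z s /\
  ex_derive (Derive x) s /\ ex_derive (Derive y) s /\ ex_derive (Derive z) s.
Proof. intros Hs. destruct (proj2 Hadm s Hs) as (_ & _ & H). tauto. Qed.

Lemma Xh_pos s t : Xh h x y z s t = screw h t (pos_vec s).
Proof. rewrite Xh_screw. reflexivity. Qed.

Lemma dS_Xh s t : in_I a b s -> dS (Xh h x y z) s t = screw h t (vel_vec s).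
Proof.
  intros Hs. destruct (admissible_derivable s Hs) as (dx & dy & dz & _).
  rewrite Xh_screw, (dS_screw h x y z (fun _ => 0)), Derive_const; auto using ex_derive_const.
Qed.

Lemma dT_Xh s t : dT (Xh h x y z) s t = screw h t (screw_gen h (pos_vec s)).
Proof. rewrite Xh_screw. apply dT_screw. Qed.

Lemma dSdS_Xh s t : in_I a b s -> dS (dS (Xh h x y z)) s t = screw h t (acc_vec s).
Proof.
  intros Hs. destruct (admissible_derivable s Hs) as (_ & _ & _ & dx & dy & dz).
  rewrite (dS_ext_loc _ (fun s t => screw h t (vel_vec s))).
  - unfold vel_vec. rewrite (dS_screw h _ _ _ (fun _ => 0)), Derive_const; auto using ex_derive_const.
  - apply (filter_imp (in_I a b)); [intros u Hu; apply dS_Xh, Hu | apply in_I_locally, Hs].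
Qed.

Lemma dTdS_Xh s t : in_I a b s -> dT (dS (Xh h x y z)) s t = screw h t (screw_gen h (vel_vec s)).
Proof.
  intros Hs. rewrite (dT_ext _ (fun s t => screw h t (vel_vec s))); [apply dT_screw|].
  intros v. apply dS_Xh, Hs.
Qed.

Lemma dTdT_Xh s t :
  dT (dT (Xh h x y z)) s t = screw h t (screw_gen h (screw_gen h (pos_vec s))).
Proof.
  rewrite (dT_ext _ (fun s t => screw h t (screw_gen h (pos_vec s)))); [apply dT_screw|].
  intros v. apply dT_Xh.
Qed.

End HelicoidalJets.

Definition mean_curv_of (P Ps Pt Pss Pst Ptt : R4) : R :=
  let Nr := cross4 P Ps Pt in let N := scal4 (/ sqrt (dot4 Nr Nr)) Nr in
  let E := dot4 Ps Ps in let F := dot4 Ps Pt in let G := dot4 Pt Pt in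
  (E * dot4 Ptt N - 2 * F * dot4 Pst N + G * dot4 Pss N) / (2 * (E * G - F ^ 2)).

Definition ext_curv_of (P Ps Pt Pss Pst Ptt : R4) : R :=
  let Nr := cross4 P Ps Pt in let N := scal4 (/ sqrt (dot4 Nr Nr)) Nr in
  let E := dot4 Ps Ps in let F := dot4 Ps Pt in let G := dot4 Pt Pt in
  (dot4 Pss N * dot4 Ptt N - dot4 Pst N ^ 2) / (E * G - F ^ 2).

Lemma mean_curv_jets X s t : mean_curv X s t =
  mean_curv_of (X s t) (dS X s t) (dT X s t) (dS (dS X) s t) (dT (dS X) s t) (dT (dT X) s t).
Proof. reflexivity. Qed.

Lemma ext_curv_jets X s t : ext_curv X s t =
  ext_curv_of (X s t) (dS X s t) (dT X s t) (dS (dS X) s t) (dT (dS X) s t) (dT (dT X) s t).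
Proof. reflexivity. Qed.

Lemma dot4_scal4 u k v : dot4 u (scal4 k v) = k * dot4 v u.
Proof. destruct u, v; unfold dot4, scal4; simpl; ring. Qed.

Lemma dot4_cross4_self u v w : dot4 (cross4 u v w) (cross4 u v w) =
  dot4 u u * (dot4 v v * dot4 w w - dot4 v w ^ 2)
  - dot4 u v * (dot4 u v * dot4 w w - dot4 v w * dot4 u w)
  + dot4 u w * (dot4 u v * dot4 v w - dot4 v v * dot4 u w).
Proof. destruct u, v, w; unfold dot4, cross4, det3; simpl; ring. Qed.

Lemma dot4_screw h t u v : dot4 (screw h t u) (screw h t v) = dot4 u v.
Proof.
  pose proof (sin2_cos2 (h * t)); pose proof (sin2_cos2 t); unfold Rsqr in *.
  destruct u, v; unfold dot4, screw; simpl. nsatz.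
Qed.

Lemma dot4_cross4_screw h t u v w q :
  dot4 (cross4 (screw h t u) (screw h t v) (screw h t w)) (screw h t q) = dot4 (cross4 u v w) q.
Proof.
  transitivity ((sin (h * t) ^ 2 + cos (h * t) ^ 2) * (sin t ^ 2 + cos t ^ 2)
                * dot4 (cross4 u v w) q).
  - destruct u, v, w, q; unfold dot4, cross4, det3, screw; simpl; ring.
  - rewrite <- !Rsqr_pow2, !sin2_cos2. ring.
Qed.

Lemma mean_curv_of_screw h t P Ps Pt Pss Pst Ptt :
  mean_curv_of (screw h t P) (screw h t Ps) (screw h t Pt) (screw h t Pss) (screw h t Pst)
    (screw h t Ptt) = mean_curv_of P Ps Pt Pss Pst Ptt.
Proof.
  unfold mean_curv_of. cbv zeta. rewrite !dot4_scal4, !dot4_cross4_self, !dot4_screw.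
  rewrite !dot4_cross4_screw. reflexivity.
Qed.

Lemma ext_curv_of_screw h t P Ps Pt Pss Pst Ptt :
  ext_curv_of (screw h t P) (screw h t Ps) (screw h t Pt) (screw h t Pss) (screw h t Pst)
    (screw h t Ptt) = ext_curv_of P Ps Pt Pss Pst Ptt.
Proof.
  unfold ext_curv_of. cbv zeta. rewrite !dot4_scal4, !dot4_cross4_self, !dot4_screw.
  rewrite !dot4_cross4_screw. reflexivity.
Qed.

Definition gram (h z K : R) : R := h ^ 2 * (1 - z ^ 2) + z ^ 2 - h ^ 2 * K ^ 2.

Section ProfileAlgebra.
Variables (h x y z x1 y1 z1 x2 y2 z2 : R).
Hypotheses (Hz : 0 < z) (on_sphere : x ^ 2 + y ^ 2 + z ^ 2 = 1)
  (unit_speed : x1 ^ 2 + y1 ^ 2 + z1 ^ 2 = 1) (tangent : x * x1 + y * y1 + z * z1 = 0)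
  (acc_normal : x1 * x2 + y1 * y2 + z1 * z2 = 0).

Let P := mkR4 x y z 0.
Let Ps := mkR4 x1 y1 z1 0.
Let Pss := mkR4 x2 y2 z2 0.
Let K := x1 * y - x * y1.
Let K1 := x2 * y - x * y2.
Let W := gram h z K.

Lemma ang_mom_sqr_alg : K ^ 2 = 1 - z ^ 2 - z1 ^ 2.
Proof. unfold K. simpl in *. nsatz. Qed.

Lemma gram_alg : W = z ^ 2 + h ^ 2 * z1 ^ 2.
Proof. unfold W, gram. rewrite ang_mom_sqr_alg. ring. Qed.

Lemma gram_alg_pos : 0 < W.
Proof. rewrite gram_alg. nra. Qed.

Let Nr := cross4 P Ps (screw_gen h P).
Let tau := x2 * (y * z1 - z * y1) + y2 * (z * x1 - x * z1) + z2 * (x * y1 - y * x1).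

Lemma profile_normal :
  Nr = mkR4 (- (z * (y * z1 - z * y1))) (- (z * (z * x1 - x * z1))) (- (z * (x * y1 - y * x1)))
            (- (h * z1)).
Proof.
  unfold Nr, P, Ps, screw_gen, cross4, det3; simpl in *. f_equal; try ring. nsatz.
Qed.

Lemma profile_fundamental_forms :
  dot4 Ps Ps = 1 /\ dot4 Ps (screw_gen h P) = - (h * K) /\
  dot4 (screw_gen h P) (screw_gen h P) = h ^ 2 * (1 - z ^ 2) + z ^ 2 /\
  dot4 Nr Nr = W /\ dot4 Nr Pss = - (z * tau) /\ z1 * tau = K1 /\
  dot4 Nr (screw_gen h Ps) = - (h * (z ^ 2 + z1 ^ 2)) /\
  dot4 Nr (screw_gen h (screw_gen h P)) = - ((1 - h ^ 2) * z ^ 2 * K).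
Proof.
  rewrite profile_normal, gram_alg. unfold P, Ps, Pss, K, K1, tau, screw_gen, dot4; simpl in *.
  repeat split; nsatz.
Qed.

Lemma mean_curv_of_profile :
  2 * z * z1 * mean_curv_of P Ps (screw_gen h P) Pss (screw_gen h Ps)
                 (screw_gen h (screw_gen h P)) * (W * sqrt W) =
  - ((2 * z * z1 * K + z ^ 2 * K1) * W - z ^ 2 * K * ((1 - h ^ 2) * z * z1 - h ^ 2 * K * K1)).
Proof.
  destruct profile_fundamental_forms as (hE & hF & hG & hNN & hl & htau & hm & hn).
  pose proof gram_alg_pos as Wpos. pose proof (sqrt_lt_R0 W Wpos) as sqrt_pos.
  assert (hEG : 1 * (h ^ 2 * (1 - z ^ 2) + z ^ 2) - (- (h * K)) ^ 2 = W)
    by (unfold W, gram; ring).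
  unfold mean_curv_of. cbv zeta. fold Nr.
  rewrite !dot4_scal4, hE, hF, hG, hNN, hl, hm, hn, hEG, <- htau.
  field_simplify; [|lra..]. unfold W, gram. rewrite ang_mom_sqr_alg. field.
Qed.

Lemma ext_curv_of_profile :
  2 * z * z1 * ext_curv_of P Ps (screw_gen h P) Pss (screw_gen h Ps)
                 (screw_gen h (screw_gen h P)) * W ^ 2 =
  (2 * K * K1 * z ^ 2 + (K ^ 2 - 1) * 2 * z * z1) * W
  - (K ^ 2 - 1) * z ^ 2 * 2 * ((1 - h ^ 2) * z * z1 - h ^ 2 * K * K1).
Proof.
  destruct profile_fundamental_forms as (hE & hF & hG & hNN & hl & htau & hm & hn).
  pose proof gram_alg_pos as Wpos. pose proof (sqrt_lt_R0 W Wpos) as sqrt_pos.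
  assert (hEG : 1 * (h ^ 2 * (1 - z ^ 2) + z ^ 2) - (- (h * K)) ^ 2 = W)
    by (unfold W, gram; ring).
  unfold ext_curv_of. cbv zeta. fold Nr.
  rewrite !dot4_scal4, hE, hF, hG, hNN, hl, hm, hn, hEG, <- htau.
  field_simplify; [|lra..]. rewrite pow2_sqrt by lra.
  pose proof ang_mom_sqr_alg as HK. rewrite gram_alg. field_simplify_eq; [|nra].
  clear - HK htau. simpl in *. nsatz.
Qed.
End ProfileAlgebra.

Section HelicoidalCurvatures.
Variables (h : R) (a b : Rbar) (x y z : R -> R).
Hypothesis Hadm : admissible_profile a b x y z.

Lemma admissible_orthogonality s : in_I a b s ->
  x s * Derive x s + y s * Derive y s + z s * Derive z s = 0 /\
  Derive x s * Derive (Derive x) s + Derive y s * Derive (Derive y) s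
    + Derive z s * Derive (Derive z) s = 0.
Proof.
  intros Hs. destruct (admissible_derivable a b x y z Hadm s Hs) as (dx & dy & dz & ddx & ddy & ddz).
  assert (Hloc := in_I_locally a b s Hs).
  split.
  - enough (E : 2 * (x s * Derive x s + y s * Derive y s + z s * Derive z s) = 0) by lra.
    apply (is_derive_locally_const (fun u => x u ^ 2 + y u ^ 2 + z u ^ 2) s 1).
    + apply (filter_imp (in_I a b)); [intros u Hu; apply (proj2 Hadm u Hu) | exact Hloc].
    + auto_derive; auto. fold_eta. ring.
  - enough (E : 2 * (Derive x s * Derive (Derive x) s + Derive y s * Derive (Derive y) s
                     + Derive z s * Derive (Derive z) s) = 0) by lra.
    apply (is_derive_locally_const (fun u => Derive x u ^ 2 + Derive y u ^ 2 + Derive z u ^ 2) s 1).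
    + apply (filter_imp (in_I a b)); [intros u Hu; apply (proj2 Hadm u Hu) | exact Hloc].
    + auto_derive; auto. fold_eta. ring.
Qed.

Lemma is_derive_ang_mom s : in_I a b s ->
  is_derive (ang_mom x y) s (Derive (Derive x) s * y s - x s * Derive (Derive y) s).
Proof.
  intros Hs. destruct (admissible_derivable a b x y z Hadm s Hs) as (dx & dy & _ & ddx & ddy & _).
  unfold ang_mom. auto_derive; auto. fold_eta. ring.
Qed.

Theorem curvatures_Xh s t : in_I a b s ->
  let K := ang_mom x y s in let K1 := Derive (ang_mom x y) s in
  let z1 := Derive z s in let W := gram h (z s) K in
  0 < W /\
  2 * z s * z1 * mean_curv (Xh h x y z) s t * (W * sqrt W) =
    - ((2 * z s * z1 * K + z s ^ 2 * K1) * W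
       - z s ^ 2 * K * ((1 - h ^ 2) * z s * z1 - h ^ 2 * K * K1)) /\
  2 * z s * z1 * ext_curv (Xh h x y z) s t * W ^ 2 =
    (2 * K * K1 * z s ^ 2 + (K ^ 2 - 1) * 2 * z s * z1) * W
    - (K ^ 2 - 1) * z s ^ 2 * 2 * ((1 - h ^ 2) * z s * z1 - h ^ 2 * K * K1).
Proof.
  intros Hs K K1 z1 W.
  destruct (proj2 Hadm s Hs) as (on_sphere & Hz & _ & _ & _ & _ & _ & _ & _ & _ & _ & unit_speed & _).
  destruct (admissible_orthogonality s Hs) as [tangent acc_normal].
  unfold K1. rewrite (is_derive_unique _ _ _ (is_derive_ang_mom s Hs)).
  rewrite mean_curv_jets, ext_curv_jets, Xh_pos, (dS_Xh h a b x y z Hadm s t Hs), dT_Xh,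
    (dSdS_Xh h a b x y z Hadm s t Hs), (dTdS_Xh h a b x y z Hadm s t Hs), dTdT_Xh,
    mean_curv_of_screw, ext_curv_of_screw.
  split; [|split].
  - eapply gram_alg_pos; eassumption.
  - apply mean_curv_of_profile; assumption.
  - apply ext_curv_of_profile; assumption.
Qed.

Definition mean_first_integral (s : R) : R :=
  z s ^ 2 * ang_mom x y s / sqrt (gram h (z s) (ang_mom x y s)).

Definition ext_first_integral (s : R) : R :=
  (ang_mom x y s ^ 2 - 1) * z s ^ 2 / gram h (z s) (ang_mom x y s).

Lemma is_derive_gram s : in_I a b s ->
  is_derive (fun u => gram h (z u) (ang_mom x y u)) s
    (2 * ((1 - h ^ 2) * z s * Derive z s - h ^ 2 * ang_mom x y s * Derive (ang_mom x y) s)).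
Proof.
  intros Hs. destruct (admissible_derivable a b x y z Hadm s Hs) as (_ & _ & dz & _).
  assert (dK : ex_derive (ang_mom x y) s) by (eexists; apply is_derive_ang_mom, Hs).
  unfold gram. auto_derive; auto. fold_eta. ring.
Qed.

Lemma is_derive_mean_first_integral s t : in_I a b s ->
  is_derive mean_first_integral s (- (2 * z s * Derive z s * mean_curv (Xh h x y z) s t)).
Proof.
  intros Hs. destruct (curvatures_Xh s t Hs) as (Wpos & HM & _).
  destruct (admissible_derivable a b x y z Hadm s Hs) as (_ & _ & dz & _).
  assert (dK : ex_derive (ang_mom x y) s) by (eexists; apply is_derive_ang_mom, Hs).
  assert (dN : is_derive (fun u => z u ^ 2 * ang_mom x y u) s
                 (2 * z s * Derive z s * ang_mom x y s + z s ^ 2 * Derive (ang_mom x y) s))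
    by (auto_derive; auto; fold_eta; ring).
  pose proof (sqrt_lt_R0 _ Wpos) as sqrt_pos.
  refine (eq_ind _ (is_derive _ s) (is_derive_div _ _ s _ _ dN
            (is_derive_sqrt _ s _ (is_derive_gram s Hs) Wpos) (Rgt_not_eq _ _ sqrt_pos)) _ _).
  set (W := gram h (z s) (ang_mom x y s)) in *.
  apply (Rmult_eq_reg_r (W * sqrt W)); [|apply Rgt_not_eq, Rmult_lt_0_compat; lra].
  rewrite Ropp_mult_distr_l_reverse, HM, pow2_sqrt by lra.
  pose proof (sqrt_sqrt W (Rlt_le _ _ Wpos)) as sqrt_sqr. set (q := sqrt W) in *.
  rewrite <- sqrt_sqr. field. lra.
Qed.

Lemma is_derive_ext_first_integral s t : in_I a b s ->
  is_derive ext_first_integral s (2 * z s * Derive z s * ext_curv (Xh h x y z) s t).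
Proof.
  intros Hs. destruct (curvatures_Xh s t Hs) as (Wpos & _ & HE).
  destruct (admissible_derivable a b x y z Hadm s Hs) as (_ & _ & dz & _).
  assert (dK : ex_derive (ang_mom x y) s) by (eexists; apply is_derive_ang_mom, Hs).
  assert (dN : is_derive (fun u => (ang_mom x y u ^ 2 - 1) * z u ^ 2) s
                 (2 * ang_mom x y s * Derive (ang_mom x y) s * z s ^ 2
                  + (ang_mom x y s ^ 2 - 1) * 2 * z s * Derive z s))
    by (auto_derive; auto; fold_eta; ring).
  refine (eq_ind _ (is_derive _ s)
            (is_derive_div _ _ s _ _ dN (is_derive_gram s Hs) (Rgt_not_eq _ _ Wpos)) _ _).
  set (W := gram h (z s) (ang_mom x y s)) in *.
  apply (Rmult_eq_reg_r (W ^ 2)); [|apply pow_nonzero; lra].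
  rewrite HE. field. lra.
Qed.

End HelicoidalCurvatures.

(** * First integrals and the angular momentum *)

Section FirstIntegralInversion.
Variables (h z K e : R).
Hypotheses (Hz : 0 < z) (Wpos : 0 < gram h z K) (He : e * e = 1).

Lemma gram_plus : h ^ 2 + (1 - h ^ 2) * z ^ 2 = gram h z K + h ^ 2 * K ^ 2.
Proof. unfold gram. ring. Qed.

Lemma fA_of_first_integral (Phi : R -> R) :
  Phi z = e * (z ^ 2 * K / sqrt (gram h z K)) -> fA h Phi z = e * K.
Proof.
  intros HPhi. unfold fA. cbv zeta. rewrite gram_plus.
  set (W := gram h z K) in *.
  pose proof (sqrt_lt_R0 _ Wpos) as wpos. pose proof (sqrt_sqrt _ (Rlt_le _ _ Wpos)) as ww.
  assert (Gpos : 0 < W + h ^ 2 * K ^ 2) by nra.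
  pose proof (sqrt_lt_R0 _ Gpos) as gpos. pose proof (sqrt_sqrt _ (Rlt_le _ _ Gpos)) as gg.
  set (w := sqrt W) in *. set (g := sqrt (W + h ^ 2 * K ^ 2)) in *.
  assert (HA : Phi z / z ^ 2 = e * K / w) by (rewrite HPhi; field; lra).
  assert (Hq : 1 + h ^ 2 * (Phi z / z ^ 2) ^ 2 = (g / w) ^ 2).
  { rewrite HA. field_simplify_eq; [|lra]. clear - ww gg He. simpl in *. nsatz. }
  rewrite Hq, sqrt_pow2, HA by (apply Rlt_le, Rdiv_lt_0_compat; auto).
  field. lra.
Qed.

Lemma first_integral_of_fA (Phi : R -> R) :
  K = e * fA h Phi z -> Phi z = e * (z ^ 2 * K / sqrt (gram h z K)).
Proof.
  intros HK. unfold fA in HK. cbv zeta in HK.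
  set (A := Phi z / z ^ 2) in *.
  assert (Gpos : 0 < h ^ 2 + (1 - h ^ 2) * z ^ 2) by (rewrite gram_plus; nra).
  pose proof (sqrt_lt_R0 _ Gpos) as gpos. pose proof (sqrt_sqrt _ (Rlt_le _ _ Gpos)) as gg.
  assert (Qpos : 0 < 1 + h ^ 2 * A ^ 2) by nra.
  pose proof (sqrt_lt_R0 _ Qpos) as qpos. pose proof (sqrt_sqrt _ (Rlt_le _ _ Qpos)) as qq.
  set (g := sqrt (h ^ 2 + (1 - h ^ 2) * z ^ 2)) in *. set (q := sqrt (1 + h ^ 2 * A ^ 2)) in *.
  assert (HW : gram h z K = (g / q) ^ 2).
  { replace (gram h z K) with (h ^ 2 + (1 - h ^ 2) * z ^ 2 - h ^ 2 * K ^ 2)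
      by (rewrite gram_plus; ring).
    rewrite HK. field_simplify_eq; [|lra]. clear - gg qq He. simpl in *. nsatz. }
  rewrite HW, sqrt_pow2 by (apply Rlt_le, Rdiv_lt_0_compat; auto).
  replace (Phi z) with (z ^ 2 * A) by (unfold A; field; lra).
  rewrite HK. field_simplify_eq; [|lra]. clear - He. simpl in *. nsatz.
Qed.

Lemma RB_of_ext_first_integral (B : R -> R) : h ^ 2 <> 1 ->
  B z = (K ^ 2 - 1) * z ^ 2 / gram h z K -> z ^ 2 + h ^ 2 * B z <> 0 /\ RB h B z = K ^ 2.
Proof.
  intros Hh HB.
  assert (E : z ^ 2 + h ^ 2 * B z = z ^ 2 * z ^ 2 * (1 - h ^ 2) / gram h z K).
  { rewrite HB. unfold gram in *. field. lra. }
  assert (Enz : z ^ 2 * z ^ 2 * (1 - h ^ 2) / gram h z K <> 0).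
  { apply Rgt_not_eq in Wpos. apply Rgt_not_eq in Hz.
    unfold Rdiv. repeat apply Rmult_integral_contrapositive_currified;
      auto using pow_nonzero, Rinv_neq_0_compat; lra. }
  split; [rewrite E; exact Enz|].
  unfold RB. rewrite E, HB. unfold gram in *. field. split; [lra|]. split; [|lra].
  intro C. apply Hh. lra.
Qed.

Lemma ext_first_integral_of_RB (B : R -> R) : z ^ 2 + h ^ 2 * B z <> 0 ->
  RB h B z = K ^ 2 -> B z = (K ^ 2 - 1) * z ^ 2 / gram h z K.
Proof.
  intros Hnz HR. unfold RB in HR.
  assert (E : (K ^ 2 - 1) * (z ^ 2 + h ^ 2 * B z) = (1 - h ^ 2) * z ^ 2 * B z)
    by (rewrite <- HR; field; exact Hnz).
  apply (Rmult_eq_reg_r (gram h z K)); [|lra].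
  unfold Rdiv. rewrite Rmult_assoc, Rinv_l by lra. unfold gram. lra.
Qed.

End FirstIntegralInversion.

Section Characterizations.
Variables (a b : Rbar) (x y z : R -> R).
Hypothesis Hadm : admissible_profile a b x y z.

Lemma admissible_height s : in_I a b s -> 0 < z s /\ ex_derive z s /\ Derive z s <> 0.
Proof.
  intros Hs. destruct (proj2 Hadm s Hs) as (_ & Hz & _ & _ & dz & _ & _ & _ & _ & _ & _ & _ & nz).
  auto.
Qed.

Lemma first_integral_antideriv (F f P : R -> R) c : antideriv f P ->
  (forall s, in_I a b s -> is_derive F s (c * (f (z s) * Derive z s))) ->
  exists C, forall s, in_I a b s -> F s = c * P (z s) + C.
Proof.
  intros HP HF. destruct (in_I_nonempty a b (proj1 Hadm)) as [s0 Hs0].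
  exists (F s0 - c * P (z s0)). intros s Hs.
  enough (E : F s - c * P (z s) = F s0 - c * P (z s0)) by lra.
  apply (is_derive_0_const (in_I a b) (fun u => F u - c * P (z u))); auto.
  - intros u v w; apply in_I_between.
  - intros u Hu. destruct (admissible_height u Hu) as (Hz & dz & _).
    replace 0 with (c * (f (z u) * Derive z u) - c * (f (z u) * Derive z u)) by ring.
    apply (is_derive_minus F), (is_derive_scal (fun u => P (z u))); auto.
    apply is_derive_antideriv_comp; auto.
Qed.

Lemma derive_of_first_integral (F f P : R -> R) c s l : antideriv f P ->
  (forall u, in_I a b u -> P (z u) = c * F u) -> in_I a b s -> is_derive F s l ->
  f (z s) * Derive z s = c * l.
Proof.
  intros HP HF Hs dF. destruct (admissible_height s Hs) as (Hz & dz & _).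
  rewrite <- (is_derive_unique _ _ _ (is_derive_antideriv_comp f P z s HP Hz dz)).
  apply is_derive_unique, (is_derive_ext_loc (fun u => c * F u)).
  - apply (filter_imp (in_I a b)); [intros u Hu; symmetry; auto | apply in_I_locally, Hs].
  - apply (is_derive_scal F); auto.
Qed.

Lemma gram_profile_pos h s : in_I a b s -> 0 < gram h (z s) (ang_mom x y s).
Proof. intros Hs. exact (proj1 (curvatures_Xh h a b x y z Hadm s 0 Hs)). Qed.

Lemma ang_mom_of_mean_curvature h H : (forall w, 0 < w -> continuous H w) ->
  has_mean_curvature h a b x y z H ->
  exists Phi eps, antideriv (fun w => 2 * w * H w) Phi /\ (eps = 1 \/ eps = -1) /\
    forall s, in_I a b s -> ang_mom x y s = eps * fA h Phi (z s).
Proof.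
  intros Hc (eps0 & He & HM). pose proof (sign_sqr eps0 He) as He2.
  destruct (antideriv_of_continuous _ (continuous_2z H Hc)) as [Psi HPsi].
  destruct (first_integral_antideriv (mean_first_integral h x y z) _ Psi (- eps0) HPsi)
    as [C HC].
  { intros s Hs. rewrite <- (HM s 0 Hs).
    replace (- eps0 * (2 * z s * (eps0 * mean_curv (Xh h x y z) s 0) * Derive z s))
      with (- (2 * z s * Derive z s * mean_curv (Xh h x y z) s 0))
      by (transitivity ((eps0 * eps0) * - (2 * z s * Derive z s * mean_curv (Xh h x y z) s 0));
          [rewrite He2 |]; ring).
    apply (is_derive_mean_first_integral h a b x y z Hadm), Hs. }
  exists (fun w => Psi w + - (eps0 * C)), (- eps0). split; [|split].
  - apply antideriv_plus_const, HPsi.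
  - destruct He; [right | left]; lra.
  - intros s Hs. destruct (admissible_height s Hs) as (Hz & _).
    rewrite (fA_of_first_integral h (z s) (ang_mom x y s) (- eps0)); auto.
    + transitivity ((eps0 * eps0) * ang_mom x y s); [rewrite He2 |]; ring.
    + apply gram_profile_pos, Hs.
    + lra.
    + fold (mean_first_integral h x y z s). rewrite HC by exact Hs.
      transitivity ((eps0 * eps0) * Psi (z s) - eps0 * C); [rewrite He2 |]; ring.
Qed.

Lemma mean_curvature_of_ang_mom h H Phi eps : antideriv (fun w => 2 * w * H w) Phi ->
  (eps = 1 \/ eps = -1) -> (forall s, in_I a b s -> ang_mom x y s = eps * fA h Phi (z s)) ->
  has_mean_curvature h a b x y z H.
Proof.
  intros HPhi He HK. exists (- eps). split; [destruct He; [right | left]; lra|].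
  intros s t Hs. destruct (admissible_height s Hs) as (Hz & _ & nz).
  assert (HF : forall u, in_I a b u -> Phi (z u) = eps * mean_first_integral h x y z u).
  { intros u Hu. apply first_integral_of_fA; auto.
    - apply admissible_height, Hu.
    - apply gram_profile_pos, Hu.
    - apply sign_sqr, He. }
  pose proof (derive_of_first_integral _ _ _ _ s _ HPhi HF Hs
                (is_derive_mean_first_integral h a b x y z Hadm s t Hs)) as E.
  apply (Rmult_eq_reg_l (2 * z s * Derive z s)); [lra|].
  repeat apply Rmult_integral_contrapositive_currified; lra.
Qed.

Lemma ang_mom_of_ext_curvature h Kext : (forall w, 0 < w -> continuous Kext w) -> h ^ 2 <> 1 ->
  has_ext_curvature h a b x y z Kext ->
  exists B, antideriv (fun w => 2 * w * Kext w) B /\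
    forall s, in_I a b s ->
      z s ^ 2 + h ^ 2 * B (z s) <> 0 /\ 0 <= RB h B (z s) /\
      (ang_mom x y s = sqrt (RB h B (z s)) \/ ang_mom x y s = - sqrt (RB h B (z s))).
Proof.
  intros Hc Hh HE.
  destruct (antideriv_of_continuous _ (continuous_2z Kext Hc)) as [Psi HPsi].
  destruct (first_integral_antideriv (ext_first_integral h x y z) _ Psi 1 HPsi) as [C HC].
  { intros s Hs.
    replace (1 * (2 * z s * Kext (z s) * Derive z s))
      with (2 * z s * Derive z s * ext_curv (Xh h x y z) s 0) by (rewrite <- (HE s 0 Hs); ring).
    apply (is_derive_ext_first_integral h a b x y z Hadm), Hs. }
  exists (fun w => Psi w + C). split.
  - apply antideriv_plus_const, HPsi.
  - intros s Hs. destruct (admissible_height s Hs) as (Hz & _).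
    destruct (RB_of_ext_first_integral h (z s) (ang_mom x y s) Hz (gram_profile_pos h s Hs)
                (fun w => Psi w + C) Hh) as [Hnz HR].
    { rewrite <- (Rmult_1_l (Psi (z s))), <- HC by exact Hs. reflexivity. }
    rewrite HR. split; [exact Hnz | split; [nra |]].
    destruct (Rle_or_lt 0 (ang_mom x y s)) as [L | L].
    + left. rewrite sqrt_pow2; auto.
    + right. replace (ang_mom x y s ^ 2) with ((- ang_mom x y s) ^ 2) by ring.
      rewrite sqrt_pow2; lra.
Qed.

Lemma ext_curvature_of_ang_mom h Kext B : antideriv (fun w => 2 * w * Kext w) B ->
  (forall s, in_I a b s ->
     z s ^ 2 + h ^ 2 * B (z s) <> 0 /\ 0 <= RB h B (z s) /\
     (ang_mom x y s = sqrt (RB h B (z s)) \/ ang_mom x y s = - sqrt (RB h B (z s)))) ->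
  has_ext_curvature h a b x y z Kext.
Proof.
  intros HB HK s t Hs. destruct (admissible_height s Hs) as (Hz & _ & nz).
  assert (HF : forall u, in_I a b u -> B (z u) = 1 * ext_first_integral h x y z u).
  { intros u Hu. destruct (HK u Hu) as (Hnz & HRpos & HKu). rewrite Rmult_1_l.
    apply (ext_first_integral_of_RB h (z u) (ang_mom x y u) (gram_profile_pos h u Hu)); auto.
    replace (ang_mom x y u ^ 2) with (sqrt (RB h B (z u)) ^ 2) by (destruct HKu as [-> | ->]; ring).
    symmetry. apply pow2_sqrt, HRpos. }
  pose proof (derive_of_first_integral _ _ _ _ s _ HB HF Hs
                (is_derive_ext_first_integral h a b x y z Hadm s t Hs)) as E.
  apply (Rmult_eq_reg_l (2 * z s * Derive z s)); [lra|].
  repeat apply Rmult_integral_contrapositive_currified; lra.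
Qed.

End Characterizations.

(** * Uniqueness up to translations along c_0 *)

Definition height_speed (F : R -> R) (w : R) : R := sqrt (1 - w ^ 2 - F w ^ 2).

Section ProfileKinematics.
Variables (a b : Rbar) (x y z : R -> R).
Hypothesis Hadm : admissible_profile a b x y z.

Lemma ang_mom_sqr s : in_I a b s -> ang_mom x y s ^ 2 = 1 - z s ^ 2 - Derive z s ^ 2.
Proof.
  intros Hs.
  destruct (proj2 Hadm s Hs) as (on_sphere & Hz & _ & _ & _ & _ & _ & _ & _ & _ & _ & unit_speed & _).
  destruct (admissible_orthogonality a b x y z Hadm s Hs) as [tangent acc_normal].
  eapply ang_mom_sqr_alg; eassumption.
Qed.

Lemma slopes_same_sign u v : in_I a b u -> in_I a b v -> 0 < Derive z u * Derive z v.
Proof.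
  apply nonzero_continuous_same_sign. intros w Hw.
  split; [| apply (admissible_height a b x y z Hadm w Hw)].
  apply continuity_pt_filterlim, (continuous_of_is_derive _ w (Derive (Derive z) w)), Derive_correct.
  apply (admissible_derivable a b x y z Hadm w Hw).
Qed.

Lemma planar_derive s : in_I a b s ->
  x s ^ 2 + y s ^ 2 = 1 - z s ^ 2 /\
  Derive x s * (1 - z s ^ 2) = - (z s * Derive z s) * x s + ang_mom x y s * y s /\
  Derive y s * (1 - z s ^ 2) = - (z s * Derive z s) * y s - ang_mom x y s * x s.
Proof.
  intros Hs. destruct (proj2 Hadm s Hs) as (on_sphere & _).
  destruct (admissible_orthogonality a b x y z Hadm s Hs) as [tangent _].
  assert (E : x s ^ 2 + y s ^ 2 = 1 - z s ^ 2) by lra.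
  split; [exact E |]. rewrite <- E. unfold ang_mom.
  replace (- (z s * Derive z s)) with (x s * Derive x s + y s * Derive y s) by lra.
  split; ring.
Qed.

Variables (F : R -> R) (sg : R).
Hypotheses (HF : forall s, in_I a b s -> ang_mom x y s = F (z s)) (Hsg : sg * sg = 1).

Lemma slope_of_ang_mom s : in_I a b s -> 0 < sg * Derive z s ->
  sg * Derive z s = height_speed F (z s).
Proof.
  intros Hs Hpos. unfold height_speed. rewrite <- (HF s Hs), (ang_mom_sqr s Hs).
  replace (1 - z s ^ 2 - (1 - z s ^ 2 - Derive z s ^ 2)) with ((sg * Derive z s) ^ 2)
    by (transitivity ((sg * sg) * Derive z s ^ 2); [ring | rewrite Hsg; ring]).
  rewrite sqrt_pow2; lra.
Qed.

Lemma signed_height_ode s v : in_I a b (s + v) -> 0 < sg * Derive z (s + v) ->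
  let G := fun w => height_speed F (sg * w) in
  is_derive (fun v => sg * z (s + v)) v (G (sg * z (s + v))) /\ 0 < G (sg * z (s + v)).
Proof.
  intros Hv Hpos G. unfold G.
  replace (sg * (sg * z (s + v))) with (z (s + v))
    by (transitivity ((sg * sg) * z (s + v)); [rewrite Hsg |]; ring).
  rewrite <- (slope_of_ang_mom (s + v) Hv Hpos). split; [| exact Hpos].
  apply (is_derive_scal (fun v => z (s + v))).
  destruct (admissible_derivable a b x y z Hadm (s + v) Hv) as (_ & _ & dz & _).
  auto_derive; auto. fold_eta. ring.
Qed.

End ProfileKinematics.

Section TwoProfiles.
Variables (F : R -> R) (a1 b1 a2 b2 : Rbar) (x1 y1 z1 x2 y2 z2 : R -> R) (s1 s2 sg : R).
Hypotheses (A1 : admissible_profile a1 b1 x1 y1 z1) (A2 : admissible_profile a2 b2 x2 y2 z2)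
  (HF1 : forall s, in_I a1 b1 s -> ang_mom x1 y1 s = F (z1 s))
  (HF2 : forall s, in_I a2 b2 s -> ang_mom x2 y2 s = F (z2 s))
  (Hs1 : in_I a1 b1 s1) (Hs2 : in_I a2 b2 s2) (Hz0 : z1 s1 = z2 s2)
  (Hslopes : 0 < Derive z1 s1 * Derive z2 s2) (Hsg : sg * sg = 1) (Hsg1 : 0 < sg * Derive z1 s1).

Let D u := in_I a1 b1 (s1 + u) /\ in_I a2 b2 (s2 + u).

Lemma common_domain_convex u v w : D u -> D v -> u <= w <= v -> D w.
Proof.
  intros [Hu1 Hu2] [Hv1 Hv2] Hw.
  split; [apply (in_I_between a1 b1 (s1 + u) (s1 + v)) | apply (in_I_between a2 b2 (s2 + u) (s2 + v))];
    auto; lra.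
Qed.

Lemma common_domain_0 : D 0.
Proof. unfold D. rewrite !Rplus_0_r. auto. Qed.

Lemma signed_slope1 v : in_I a1 b1 (s1 + v) -> 0 < sg * Derive z1 (s1 + v).
Proof.
  intros Hv. pose proof (slopes_same_sign a1 b1 x1 y1 z1 A1 s1 (s1 + v) Hs1 Hv). nra.
Qed.

Lemma signed_slope2 v : in_I a2 b2 (s2 + v) -> 0 < sg * Derive z2 (s2 + v).
Proof.
  intros Hv. pose proof (slopes_same_sign a2 b2 x2 y2 z2 A2 s2 (s2 + v) Hs2 Hv).
  assert (0 < sg * Derive z2 s2) by nra. nra.
Qed.

Lemma heights_agree u : D u -> z1 (s1 + u) = z2 (s2 + u).
Proof.
  intros Hu.
  assert (Dopen : forall v, D v -> locally v D)
    by (intros v [Hv1 Hv2]; apply filter_and; apply locally_shift_in_I; auto).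
  destruct (closed_interval_in_open_convex D u Dopen common_domain_convex common_domain_0 Hu)
    as (m & M & [Hm HM] & Hmu & Dmid).
  enough (E : sg * z1 (s1 + u) = sg * z2 (s2 + u)).
  { transitivity ((sg * sg) * z1 (s1 + u)); [rewrite Hsg; ring |].
    rewrite Rmult_assoc, E, <- Rmult_assoc, Hsg. ring. }
  apply (ode_unique (fun v => sg * z1 (s1 + v)) (fun v => sg * z2 (s2 + v))
           (fun w => height_speed F (sg * w)) m M); auto.
  - intros v Hv. destruct (Dmid v Hv) as [Hv1 _].
    apply (signed_height_ode a1 b1 x1 y1 z1 A1 F sg HF1 Hsg), signed_slope1; auto.
  - intros v Hv. destruct (Dmid v Hv) as [_ Hv2].
    apply (signed_height_ode a2 b2 x2 y2 z2 A2 F sg HF2 Hsg), signed_slope2; auto.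
  - rewrite !Rplus_0_r, Hz0. reflexivity.
Qed.

Lemma slopes_agree u : D u -> Derive z1 (s1 + u) = Derive z2 (s2 + u).
Proof.
  intros Hu. pose proof Hu as [Hu1 Hu2].
  pose proof (slope_of_ang_mom a1 b1 x1 y1 z1 A1 F sg HF1 Hsg _ Hu1 (signed_slope1 u Hu1)) as E1.
  pose proof (slope_of_ang_mom a2 b2 x2 y2 z2 A2 F sg HF2 Hsg _ Hu2 (signed_slope2 u Hu2)) as E2.
  rewrite <- (heights_agree u Hu), <- E1 in E2.
  transitivity ((sg * sg) * Derive z1 (s1 + u)); [rewrite Hsg; ring |].
  rewrite Rmult_assoc, <- E2, <- Rmult_assoc, Hsg. ring.
Qed.

Let r v := 1 - z1 (s1 + v) ^ 2.
Let P v := x1 (s1 + v) * x2 (s2 + v) + y1 (s1 + v) * y2 (s2 + v).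
Let Q v := x1 (s1 + v) * y2 (s2 + v) - y1 (s1 + v) * x2 (s2 + v).

Lemma planar_radius_pos u : D u -> 0 < r u.
Proof.
  intros [Hu1 _]. unfold r. pose proof (ang_mom_sqr a1 b1 x1 y1 z1 A1 (s1 + u) Hu1) as HK.
  destruct (admissible_height a1 b1 x1 y1 z1 A1 (s1 + u) Hu1) as (_ & _ & nz).
  assert (0 < Derive z1 (s1 + u) ^ 2) by (apply pow2_gt_0, nz). nra.
Qed.

(* Both [(x_i, y_i)] solve [(1 - z^2) (x, y)' = - z z' (x, y) + K (y, - x)] with the same [z],
   [z'] and [K = F z], so their inner and cross products are proportional to [1 - z^2]. *)
Lemma planar_invariants_derive u : D u ->
  is_derive (fun v => P v / r v) u 0 /\ is_derive (fun v => Q v / r v) u 0.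
Proof.
  intros Hu. pose proof (planar_radius_pos u Hu) as rpos. unfold r in rpos.
  pose proof (heights_agree u Hu) as Zeq. pose proof (slopes_agree u Hu) as Z'eq.
  destruct Hu as [Hu1 Hu2].
  destruct (admissible_derivable a1 b1 x1 y1 z1 A1 (s1 + u) Hu1) as (dx1 & dy1 & dz1 & _).
  destruct (admissible_derivable a2 b2 x2 y2 z2 A2 (s2 + u) Hu2) as (dx2 & dy2 & _).
  destruct (planar_derive a1 b1 x1 y1 z1 A1 (s1 + u) Hu1) as (_ & ex1 & ey1).
  destruct (planar_derive a2 b2 x2 y2 z2 A2 (s2 + u) Hu2) as (_ & ex2 & ey2).
  rewrite HF1 in ex1, ey1 by exact Hu1. rewrite HF2 in ex2, ey2 by exact Hu2.
  rewrite <- Zeq, <- Z'eq in ex2, ey2.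
  set (Z := z1 (s1 + u)) in *. set (Z' := Derive z1 (s1 + u)) in *.
  assert (Dx1 : Derive x1 (s1 + u) = (- (Z * Z') * x1 (s1 + u) + F Z * y1 (s1 + u)) / (1 - Z ^ 2))
    by (rewrite <- ex1; field; lra).
  assert (Dy1 : Derive y1 (s1 + u) = (- (Z * Z') * y1 (s1 + u) - F Z * x1 (s1 + u)) / (1 - Z ^ 2))
    by (rewrite <- ey1; field; lra).
  assert (Dx2 : Derive x2 (s2 + u) = (- (Z * Z') * x2 (s2 + u) + F Z * y2 (s2 + u)) / (1 - Z ^ 2))
    by (rewrite <- ex2; field; lra).
  assert (Dy2 : Derive y2 (s2 + u) = (- (Z * Z') * y2 (s2 + u) - F Z * x2 (s2 + u)) / (1 - Z ^ 2))
    by (rewrite <- ey2; field; lra).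
  assert (rnz : 1 + - (Z * (Z * 1)) <> 0)
    by (replace (1 + - (Z * (Z * 1))) with (1 - Z ^ 2) by ring; lra).
  unfold P, Q, r; split; auto_derive; try (repeat split; auto; fail);
    fold_eta; fold Z Z'; rewrite Dx1, Dy1, Dx2, Dy2; field; lra.
Qed.

Theorem planar_rotation : exists al, forall u, D u ->
  x2 (s2 + u) = x1 (s1 + u) * cos al - y1 (s1 + u) * sin al /\
  y2 (s2 + u) = x1 (s1 + u) * sin al + y1 (s1 + u) * cos al.
Proof.
  assert (Hconst : forall u, D u -> P u / r u = P 0 / r 0 /\ Q u / r u = Q 0 / r 0).
  { intros u Hu. pose proof common_domain_convex as Dconv. pose proof common_domain_0 as D0.
    split.
    - apply (is_derive_0_const D (fun v => P v / r v)); auto.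
      intros v Hv. apply (planar_invariants_derive v Hv).
    - apply (is_derive_0_const D (fun v => Q v / r v)); auto.
      intros v Hv. apply (planar_invariants_derive v Hv). }
  assert (radius : forall u, D u -> x1 (s1 + u) ^ 2 + y1 (s1 + u) ^ 2 = r u /\
                                     x2 (s2 + u) ^ 2 + y2 (s2 + u) ^ 2 = r u).
  { intros u Hu. pose proof Hu as [Hu1 Hu2]. unfold r. rewrite (heights_agree u Hu).
    split; [rewrite <- (heights_agree u Hu) |].
    - apply (planar_derive a1 b1 x1 y1 z1 A1 _ Hu1).
    - apply (planar_derive a2 b2 x2 y2 z2 A2 _ Hu2). }
  destruct (exists_angle (P 0 / r 0) (Q 0 / r 0)) as (al & Hcos & Hsin).
  { pose proof (planar_radius_pos 0 common_domain_0) as rpos.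
    destruct (radius 0 common_domain_0) as [n1 n2].
    replace ((P 0 / r 0) ^ 2 + (Q 0 / r 0) ^ 2)
      with ((x1 (s1 + 0) ^ 2 + y1 (s1 + 0) ^ 2) * (x2 (s2 + 0) ^ 2 + y2 (s2 + 0) ^ 2) / r 0 ^ 2)
      by (unfold P, Q; field; lra).
    rewrite n1, n2. field. lra. }
  exists al. intros u Hu.
  pose proof (planar_radius_pos u Hu) as rpos. destruct (radius u Hu) as [n1 _].
  destruct (Hconst u Hu) as [Pu Qu]. rewrite <- Hcos in Pu. rewrite <- Hsin in Qu.
  rewrite <- Pu, <- Qu. unfold P, Q. rewrite <- n1 in *. split; field; lra.
Qed.

End TwoProfiles.

Theorem c0_uniqueness_holds h : c0_uniqueness h.
Proof.
  intros F a1 b1 a2 b2 x1 y1 z1 x2 y2 z2 s1 s2 A1 A2 HF1 HF2 Hs1 Hs2 Hz0 Hslopes.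
  destruct (admissible_height a1 b1 x1 y1 z1 A1 s1 Hs1) as (_ & _ & nz).
  assert (Hsg : exists sg, sg * sg = 1 /\ 0 < sg * Derive z1 s1).
  { destruct (Rlt_or_le 0 (Derive z1 s1)); [exists 1 | exists (-1)]; split; lra. }
  destruct Hsg as (sg & Hsg & Hsg1).
  destruct (planar_rotation F a1 b1 a2 b2 x1 y1 z1 x2 y2 z2 s1 s2 sg A1 A2 HF1 HF2 Hs1 Hs2 Hz0
              Hslopes Hsg Hsg1) as [al Hrot].
  exists al. intros u t Hu1 Hu2. destruct (Hrot u (conj Hu1 Hu2)) as [ex2 ey2].
  unfold Xh, transl_c0; simpl.
  rewrite ex2, ey2, <- (heights_agree F a1 b1 a2 b2 x1 y1 z1 x2 y2 z2 s1 s2 sg A1 A2 HF1 HF2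
                           Hs1 Hs2 Hz0 Hslopes Hsg Hsg1 u (conj Hu1 Hu2)).
  f_equal; ring.
Qed.

(** * Existence of profile curves *)

Lemma polar_profile_identities (Z Z' K c sn rho rho' om : R) :
  c ^ 2 + sn ^ 2 = 1 -> rho ^ 2 = 1 - Z ^ 2 -> 0 < rho -> rho * rho' = - (Z * Z') ->
  om * rho ^ 2 = - K -> Z' ^ 2 = 1 - Z ^ 2 - K ^ 2 ->
  let x := rho * c in let y := rho * sn in
  let x' := rho' * c + rho * (- sn * om) in let y' := rho' * sn + rho * (c * om) in
  x ^ 2 + y ^ 2 + Z ^ 2 = 1 /\ x' ^ 2 + y' ^ 2 + Z' ^ 2 = 1 /\ x' * y - x * y' = K.
Proof.
  intros Hcs Hrho rpos Hrho' Hom HZ'. cbv zeta.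
  split; [| split]; [| apply (Rmult_eq_reg_r (rho ^ 2)); [| apply pow_nonzero; lra] |];
    clear rpos; simpl in *; nsatz.
Qed.

Lemma polar_profile_admissible (a b : Rbar) (F zeta zeta' zeta'' rho rho' rho'' th th' th'' : R -> R) :
  Rbar_lt a b ->
  (forall s, in_I a b s ->
     C2_at zeta zeta' zeta'' s /\ C2_at rho rho' rho'' s /\ C2_at th th' th'' s /\
     0 < zeta s /\ zeta' s <> 0 /\ zeta' s ^ 2 = 1 - zeta s ^ 2 - F (zeta s) ^ 2 /\
     0 < rho s /\ rho s ^ 2 = 1 - zeta s ^ 2 /\ rho s * rho' s = - (zeta s * zeta' s) /\
     th' s * rho s ^ 2 = - F (zeta s)) ->
  let x := fun s => rho s * cos (th s) in let y := fun s => rho s * sin (th s) in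
  admissible_profile a b x y zeta /\ forall s, in_I a b s -> ang_mom x y s = F (zeta s).
Proof.
  intros Hab Hs x y.
  pose (x' := fun t => rho' t * cos (th t) + rho t * (- sin (th t) * th' t)).
  pose (y' := fun t => rho' t * sin (th t) + rho t * (cos (th t) * th' t)).
  assert (Hx : exists x'', forall s, in_I a b s -> C2_at x x' x'' s).
  { eexists. intros s Hs'. destruct (Hs s Hs') as (_ & Hrho & Hth & _).
    apply C2_mult; [exact Hrho |].
    apply (C2_comp cos (fun t => - sin t) (fun t => - cos t)); [apply C1_cos | apply C1_neg_sin | exact Hth]. }
  assert (Hy : exists y'', forall s, in_I a b s -> C2_at y y' y'' s).
  { eexists. intros s Hs'. destruct (Hs s Hs') as (_ & Hrho & Hth & _).
    apply C2_mult; [exact Hrho |].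
    apply (C2_comp sin cos (fun t => - sin t)); [apply C1_sin | apply C1_cos | exact Hth]. }
  destruct Hx as [x'' Hx]. destruct Hy as [y'' Hy].
  assert (Hzeta : forall s, in_I a b s -> C2_at zeta zeta' zeta'' s) by apply Hs.
  assert (Hpolar : forall s, in_I a b s ->
    x s ^ 2 + y s ^ 2 + zeta s ^ 2 = 1 /\ x' s ^ 2 + y' s ^ 2 + zeta' s ^ 2 = 1 /\
    x' s * y s - x s * y' s = F (zeta s)).
  { intros s Hs'. destruct (Hs s Hs') as (_ & _ & _ & _ & _ & HZ' & rpos & Hrho & Hrho' & Hth').
    apply polar_profile_identities; auto.
    rewrite Rplus_comm, <- !Rsqr_pow2. apply sin2_cos2. }
  split; [split; [exact Hab |] |].
  - intros s Hs'.
    destruct (C2_Derive a b x x' x'' Hx s Hs') as (dx & Dx & ddx & cx).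
    destruct (C2_Derive a b y y' y'' Hy s Hs') as (dy & Dy & ddy & cy).
    destruct (C2_Derive a b zeta zeta' zeta'' Hzeta s Hs') as (dz & Dz & ddz & cz).
    destruct (Hpolar s Hs') as (Hsph & Hunit & _). destruct (Hs s Hs') as (_ & _ & _ & zpos & nz & _).
    rewrite Dx, Dy, Dz. repeat split; auto.
  - intros s Hs'.
    destruct (C2_Derive a b x x' x'' Hx s Hs') as (_ & Dx & _).
    destruct (C2_Derive a b y y' y'' Hy s Hs') as (_ & Dy & _).
    unfold ang_mom. rewrite Dx, Dy. apply Hpolar, Hs'.
Qed.

Lemma sqrt_one_minus_sqr_C2 : exists r1 r2 : R -> R, forall w, 0 < w < 1 ->
  C1_at (fun t => sqrt (1 - t ^ 2)) r1 w /\ C1_at r1 r2 w /\ sqrt (1 - w ^ 2) * r1 w = - w.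
Proof.
  exists (fun t => (0 - 2 * t * 1) / (2 * sqrt (1 - t ^ 2))).
  eexists. intros w Hw. assert (pos : 0 < 1 - w ^ 2) by nra.
  pose proof (sqrt_lt_R0 _ pos) as sqrt_pos.
  assert (Hsq : C1_at (fun t => 1 - t ^ 2) (fun t => 0 - 2 * t * 1) w)
    by (apply C1_minus; [apply C1_const | apply C1_sqr, C1_id]).
  split; [apply C1_sqrt; auto | split; [| field; lra]].
  unfold Rdiv. apply C1_mult.
  - apply C1_minus; [apply C1_const |].
    apply C1_mult; [apply C1_mult; [apply C1_const | apply C1_id] | apply C1_const].
  - apply C1_inv; [apply C1_mult; [apply C1_const | apply C1_sqrt; [exact Hsq | lra]] | lra].
Qed.

Section ProfileConstruction.
Variables (F F' : R -> R) (P : R -> Prop) (z0 : R).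
Hypotheses (HPloc : locally z0 P)
  (HP : forall w, P w -> 0 < w < 1 /\ F w ^ 2 < 1 - w ^ 2 /\ C1_at F F' w).

Lemma height_solution : exists (a b : R) (zeta zeta'' : R -> R), a < 0 < b /\ zeta 0 = z0 /\
  forall s, a < s < b -> P (zeta s) /\ C2_at zeta (fun t => height_speed F (zeta t)) zeta'' s.
Proof.
  destruct HPloc as [e He].
  assert (Hball : forall w, in_I (z0 - e) (z0 + e) w -> P w).
  { intros w [H1 H2]. apply He. change (Rabs (w - z0) < e). simpl in *. apply Rabs_def1; lra. }
  assert (Hspeed : exists phi', forall w, P w -> C1_at (height_speed F) phi' w /\ 0 < height_speed F w).
  { eexists. intros w Hw. destruct (HP w Hw) as (w01 & HF2 & HF). unfold height_speed.
    split; [| apply sqrt_lt_R0; lra].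
    apply C1_sqrt; [| lra].
    apply C1_minus; [apply C1_minus; [apply C1_const | apply C1_sqr, C1_id] | apply C1_sqr, HF]. }
  destruct Hspeed as [phi' Hspeed].
  destruct (autonomous_ode_solution (height_speed F) (z0 - e) z0 (z0 + e))
    as (a & b & zeta & Hab & zeta0 & Hzeta).
  { pose proof (cond_pos e). lra. }
  { intros w Hw. destruct (Hspeed w (Hball w Hw)) as [[d _] p].
    split; [eapply continuous_of_is_derive, d | exact p]. }
  exists a, b, zeta, (fun t => phi' (zeta t) * height_speed F (zeta t)).
  split; [exact Hab | split; [exact zeta0 |]]. intros s Hs. destruct (Hzeta s Hs) as [Hr dz].
  split; [apply Hball, Hr |]. apply C2_of_ode; [exact dz | apply Hspeed, Hball, Hr].
Qed.

Lemma angular_speed_C1 : exists Om', forall w, P w -> C1_at (fun t => - F t / (1 - t ^ 2)) Om' w.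
Proof.
  eexists. intros w Hw. destruct (HP w Hw) as (w01 & _ & HF). unfold Rdiv.
  apply C1_mult; [apply (C1_opp F), HF |].
  apply C1_inv; [apply C1_minus; [apply C1_const | apply C1_sqr, C1_id] | nra].
Qed.

(* The profile is [x + i y = sqrt (1 - z^2) e^(i theta)] with [theta' = - F z / (1 - z^2)] and
   [z] the solution of [z' = sqrt (1 - z^2 - F z ^ 2)] through [z0]. *)
Lemma profile_exists : exists (a b : Rbar) (x y z : R -> R),
  admissible_profile a b x y z /\ in_I a b 0 /\ z 0 = z0 /\
  forall s, in_I a b s -> P (z s) /\ ang_mom x y s = F (z s).
Proof.
  destruct height_solution as (a & b & zeta & zeta'' & Hab & zeta0 & Hzeta).
  destruct sqrt_one_minus_sqr_C2 as (r1 & r2 & Hr).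
  destruct angular_speed_C1 as [Om' HOm].
  assert (Hin : forall s, in_I a b s -> a < s < b) by (intros s [H1 H2]; simpl in *; lra).
  set (Om := fun t => - F t / (1 - t ^ 2)).
  set (th := fun s => RInt (fun u => Om (zeta u)) 0 s).
  assert (Hom : forall s, in_I a b s ->
            C1_at (fun u => Om (zeta u)) (fun u => Om' (zeta u) * height_speed F (zeta u)) s).
  { intros s Hs. destruct (Hzeta s (Hin s Hs)) as [Ps Hz2].
    apply C1_comp; [apply HOm, Ps | apply (C1_of_C2 _ _ _ _ Hz2)]. }
  assert (I0 : in_I a b 0) by (split; simpl; lra).
  destruct (polar_profile_admissible a b F zeta (fun t => height_speed F (zeta t)) zeta''
              (fun s => sqrt (1 - zeta s ^ 2))
              (fun t => r1 (zeta t) * height_speed F (zeta t))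
              (fun t => r2 (zeta t) * height_speed F (zeta t) * height_speed F (zeta t)
                        + r1 (zeta t) * zeta'' t)
              th (fun u => Om (zeta u)) (fun u => Om' (zeta u) * height_speed F (zeta u)))
    as [Hadm HK].
  { simpl. lra. }
  { intros s Hs. destruct (Hzeta s (Hin s Hs)) as [Ps Hz2]. destruct (HP _ Ps) as (Z01 & HF2 & _).
    destruct (Hr (zeta s) Z01) as (Hr1 & Hr2 & Hrr).
    assert (rpos : 0 < 1 - zeta s ^ 2) by nra.
    assert (Hspeed : 0 < 1 - zeta s ^ 2 - F (zeta s) ^ 2) by lra.
    split; [exact Hz2 | split; [apply (C2_comp (fun t => sqrt (1 - t ^ 2))); auto |]].
    split.
    { split; [| apply Hom, Hs]. apply (is_derive_RInt_in_I a b (fun u => Om (zeta u))); auto.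
      intros t Ht. eapply continuous_of_is_derive, Hom, Ht. }
    unfold height_speed, Om. rewrite !pow2_sqrt by lra.
    repeat split; try lra.
    - apply Rgt_not_eq, sqrt_lt_R0, Hspeed.
    - apply sqrt_lt_R0, rpos.
    - rewrite <- Rmult_assoc, Hrr. ring.
    - field. lra. }
  exists a, b. do 3 eexists. split; [exact Hadm | split; [exact I0 | split; [exact zeta0 |]]].
  intros s Hs. split; [apply Hzeta, Hin, Hs | apply HK, Hs].
Qed.

End ProfileConstruction.

Section PrescribedCurvature.
Variables (h : R) (H : R -> R) (Phi : R -> R).
Hypotheses (Hc : forall w, 0 < w -> continuous H w) (HPhi : antideriv (fun w => 2 * w * H w) Phi).

Lemma fA_C1 : exists F', forall w, 0 < w < 1 -> C1_at (fA h Phi) F' w.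
Proof.
  pose proof (continuous_2z H Hc) as Hc2.
  pose (A' := fun t => 2 * t * H t * / t ^ 2 + Phi t * (- (2 * t * 1) / (t ^ 2) ^ 2)).
  eexists. intros w Hw. unfold fA. cbv zeta. unfold Rdiv.
  assert (HA : C1_at (fun t => Phi t * / t ^ 2) A' w).
  { apply C1_mult; [apply C1_antideriv; auto; lra |].
    apply C1_inv; [apply C1_sqr, C1_id | apply pow_nonzero; lra]. }
  apply C1_mult; [apply C1_mult; [| exact HA] |].
  - apply C1_sqrt; [apply C1_plus; [apply C1_const | apply C1_mult; [apply C1_const | apply C1_sqr, C1_id]] |].
    assert (0 <= h ^ 2 * (1 - w ^ 2)) by (apply Rmult_le_pos; nra). nra.
  - assert (0 <= h ^ 2 * (Phi w * / w ^ 2) ^ 2) by (apply Rmult_le_pos; apply pow2_ge_0).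
    apply C1_inv; [apply C1_sqrt; [apply C1_plus; [apply C1_const | apply C1_mult; [apply C1_const | apply C1_sqr, HA]] | lra] |].
    apply Rgt_not_eq, sqrt_lt_R0. lra.
Qed.

Lemma mean_curvature_profile_exists eps z0 : (eps = 1 \/ eps = -1) -> 0 < z0 < 1 ->
  fA h Phi z0 ^ 2 < 1 - z0 ^ 2 ->
  exists (a b : Rbar) (x y z : R -> R),
    admissible_profile a b x y z /\ in_I a b 0 /\ z 0 = z0 /\
    (forall s, in_I a b s -> ang_mom x y s = eps * fA h Phi (z s)) /\
    has_mean_curvature h a b x y z H.
Proof.
  intros He Hz0 Hlt. pose proof (sign_sqr eps He) as He2.
  destruct fA_C1 as [F' HF'].
  set (F := fun w => eps * fA h Phi w).
  assert (HF : forall w, 0 < w < 1 -> C1_at F (fun t => 0 * fA h Phi t + eps * F' t) w)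
    by (intros w Hw; apply (C1_mult (fun _ => eps)); [apply C1_const | apply HF', Hw]).
  assert (HF2 : forall w, F w ^ 2 = fA h Phi w ^ 2)
    by (intros w; unfold F; transitivity ((eps * eps) * fA h Phi w ^ 2); [ring | rewrite He2; ring]).
  set (P := fun w => 0 < w < 1 /\ 0 < 1 - w ^ 2 - F w ^ 2).
  assert (HP : locally z0 P).
  { apply filter_and; [apply (locally_interval _ _ 0 1); simpl; auto; lra |].
    apply (locally_of_continuous (fun w => 1 - w ^ 2 - F w ^ 2) (fun v => 0 < v));
      [| apply open_gt | rewrite HF2; lra].
    eapply continuous_of_is_derive, (C1_minus (fun w => 1 - w ^ 2)); [| apply C1_sqr, HF, Hz0].
    apply C1_minus; [apply C1_const | apply C1_sqr, C1_id]. }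
  destruct (profile_exists F (fun t => 0 * fA h Phi t + eps * F' t) P z0 HP)
    as (a & b & x & y & z & Hadm & I0 & z00 & Hprof).
  { intros w [Hw Hpos]. split; [exact Hw | split; [lra | apply HF, Hw]]. }
  exists a, b, x, y, z. do 3 (split; [assumption |]).
  assert (HK : forall s, in_I a b s -> ang_mom x y s = eps * fA h Phi (z s)) by apply Hprof.
  split; [exact HK |]. apply (mean_curvature_of_ang_mom a b x y z Hadm h H Phi eps); auto.
Qed.

End PrescribedCurvature.

Section PrescribedExtrinsicCurvature.
Variables (h : R) (Kext : R -> R) (B : R -> R).
Hypotheses (Hc : forall w, 0 < w -> continuous Kext w) (HB : antideriv (fun w => 2 * w * Kext w) B).

Lemma RB_C1 : exists R', forall w, 0 < w -> w ^ 2 + h ^ 2 * B w <> 0 -> C1_at (RB h B) R' w.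
Proof.
  pose proof (continuous_2z Kext Hc) as Hc2.
  eexists. intros w Hw Hnz. unfold RB, Rdiv. apply C1_plus; [apply C1_const |].
  assert (HB1 : C1_at B (fun w => 2 * w * Kext w) w) by (apply C1_antideriv; auto).
  apply C1_mult; [apply C1_mult; [apply C1_mult; [apply C1_const | apply C1_sqr, C1_id] | exact HB1] |].
  apply C1_inv; [| exact Hnz].
  apply C1_plus; [apply C1_sqr, C1_id | apply C1_mult; [apply C1_const | exact HB1]].
Qed.

Lemma ext_curvature_profile_exists eps z0 : h <> 1 -> (eps = 1 \/ eps = -1) -> 0 < z0 < 1 ->
  z0 ^ 2 + h ^ 2 * B z0 <> 0 -> 0 < RB h B z0 < 1 - z0 ^ 2 ->
  exists (a b : Rbar) (x y z : R -> R),
    admissible_profile a b x y z /\ in_I a b 0 /\ z 0 = z0 /\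
    (forall s, in_I a b s -> ang_mom x y s = eps * sqrt (RB h B (z s))) /\
    has_ext_curvature h a b x y z Kext.
Proof.
  intros Hh He Hz0 Hnz0 HR0. pose proof (sign_sqr eps He) as He2.
  destruct RB_C1 as [R' HR'].
  set (F := fun w => eps * sqrt (RB h B w)).
  set (F' := fun t => 0 * sqrt (RB h B t) + eps * (R' t / (2 * sqrt (RB h B t)))).
  set (P := fun w => 0 < w < 1 /\ w ^ 2 + h ^ 2 * B w <> 0 /\ 0 < RB h B w /\
                     0 < 1 - w ^ 2 - RB h B w).
  assert (HF : forall w, P w -> C1_at F F' w).
  { intros w (Hw & Hnz & Hpos & _). apply (C1_mult (fun _ => eps)); [apply C1_const |].
    apply C1_sqrt; [apply HR'; auto; lra | exact Hpos]. }
  assert (HF2 : forall w, 0 <= RB h B w -> F w ^ 2 = RB h B w).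
  { intros w Hw. unfold F. rewrite <- (pow2_sqrt (RB h B w) Hw) at 2.
    transitivity ((eps * eps) * sqrt (RB h B w) ^ 2); [ring | rewrite He2; ring]. }
  assert (cRB : continuous (RB h B) z0) by (eapply continuous_of_is_derive, HR'; auto; lra).
  assert (HP : locally z0 P).
  { apply filter_and; [| apply filter_and; [| apply filter_and]].
    - apply (locally_interval _ _ 0 1); simpl; auto; lra.
    - apply (locally_of_continuous (fun w => w ^ 2 + h ^ 2 * B w) (fun v => v <> 0));
        [| apply open_neq | exact Hnz0].
      eapply continuous_of_is_derive, (C1_plus (fun w => w ^ 2)); [apply C1_sqr, C1_id |].
      apply (C1_mult (fun _ => h ^ 2)); [apply C1_const |].
      apply C1_antideriv; [apply continuous_2z, Hc | exact HB | lra].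
    - apply (locally_of_continuous _ (fun v => 0 < v)); [exact cRB | apply open_gt | lra].
    - apply (locally_of_continuous (fun w => 1 - w ^ 2 - RB h B w) (fun v => 0 < v));
        [| apply open_gt | lra].
      apply (continuous_minus (fun w => 1 - w ^ 2)); [| exact cRB].
      eapply continuous_of_is_derive, (C1_minus (fun _ => 1)); [apply C1_const | apply C1_sqr, C1_id]. }
  destruct (profile_exists F F' P z0 HP) as (a & b & x & y & z & Hadm & I0 & z00 & Hprof).
  { intros w Pw. pose proof Pw as (Hw & _ & Hpos & Hlt).
    split; [exact Hw | split; [rewrite HF2; lra | apply HF, Pw]]. }
  exists a, b, x, y, z. do 3 (split; [assumption |]).
  assert (HK : forall s, in_I a b s -> ang_mom x y s = eps * sqrt (RB h B (z s))) by apply Hprof.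
  split; [exact HK |]. apply (ext_curvature_of_ang_mom a b x y z Hadm h Kext B HB).
  intros s Hs. destruct (Hprof s Hs) as ((_ & Hnz & Hpos & _) & _). split; [exact Hnz | split; [lra |]].
  rewrite HK by exact Hs. destruct He as [-> | ->]; [left | right]; ring.
Qed.

End PrescribedExtrinsicCurvature.

Theorem theorem4p4 :
  (* (a) prescribed mean curvature *)
  (forall (h : R) (H : R -> R),
    0 <= h ->
    (forall z, 0 < z -> continuous H z) ->
    (exists Phi, antideriv (fun z => 2 * z * H z) Phi) /\
    (forall (Phi : R -> R) (eps z0 : R),
       antideriv (fun z => 2 * z * H z) Phi ->
       (eps = 1 \/ eps = -1) ->
       0 < z0 < 1 ->
       fA h Phi z0 ^ 2 < 1 - z0 ^ 2 ->
       exists (a b : Rbar) (x y z : R -> R),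
         admissible_profile a b x y z /\ in_I a b 0 /\ z 0 = z0 /\
         (forall s, in_I a b s -> ang_mom x y s = eps * fA h Phi (z s)) /\
         has_mean_curvature h a b x y z H) /\
    (forall (a b : Rbar) (x y z : R -> R),
       admissible_profile a b x y z ->
       (has_mean_curvature h a b x y z H <->
        exists (Phi : R -> R) (eps : R),
          antideriv (fun z => 2 * z * H z) Phi /\ (eps = 1 \/ eps = -1) /\
          forall s, in_I a b s -> ang_mom x y s = eps * fA h Phi (z s))) /\
    c0_uniqueness h)
  /\
  (* (b) prescribed extrinsic curvature *)
  (forall (h : R) (Kext : R -> R),
    0 <= h -> h <> 1 ->
    (forall z, 0 < z -> continuous Kext z) ->
    (exists B, antideriv (fun z => 2 * z * Kext z) B) /\
    (forall (B : R -> R) (eps z0 : R),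
       antideriv (fun z => 2 * z * Kext z) B ->
       (eps = 1 \/ eps = -1) ->
       0 < z0 < 1 ->
       z0 ^ 2 + h ^ 2 * B z0 <> 0 ->
       0 < RB h B z0 < 1 - z0 ^ 2 ->
       exists (a b : Rbar) (x y z : R -> R),
         admissible_profile a b x y z /\ in_I a b 0 /\ z 0 = z0 /\
         (forall s, in_I a b s -> ang_mom x y s = eps * sqrt (RB h B (z s))) /\
         has_ext_curvature h a b x y z Kext) /\
    (forall (a b : Rbar) (x y z : R -> R),
       admissible_profile a b x y z ->
       (has_ext_curvature h a b x y z Kext <->
        exists B : R -> R,
          antideriv (fun z => 2 * z * Kext z) B /\
          forall s, in_I a b s ->
            z s ^ 2 + h ^ 2 * B (z s) <> 0 /\ 0 <= RB h B (z s) /\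
            (ang_mom x y s = sqrt (RB h B (z s)) \/
             ang_mom x y s = - sqrt (RB h B (z s))))) /\
    c0_uniqueness h).
Proof.
  split.
  - intros h H _ Hc. split; [| split; [| split]].
    + apply antideriv_of_continuous, continuous_2z, Hc.
    + intros Phi eps z0 HPhi. apply mean_curvature_profile_exists; assumption.
    + intros a b x y z Hadm. split.
      * apply ang_mom_of_mean_curvature; assumption.
      * intros (Phi & eps & HPhi & He & HK). apply (mean_curvature_of_ang_mom a b x y z Hadm h H Phi eps); assumption.
    + apply c0_uniqueness_holds.
  - intros h Kext h0 h1 Hc.
    assert (Hh : h ^ 2 <> 1) by (intro E; apply h1; nra).
    split; [| split; [| split]].
    + apply antideriv_of_continuous, continuous_2z, Hc.
    + intros B eps z0 HB. apply ext_curvature_profile_exists; assumption.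
    + intros a b x y z Hadm. split.
      * apply ang_mom_of_ext_curvature; assumption.
      * intros (B & HB & HK). apply (ext_curvature_of_ang_mom a b x y z Hadm h Kext B); assumption.
    + apply c0_uniqueness_holds.
Qed.
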